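(* Let $i\in\mathbb{N}_0$ and let $\alpha,\beta\in\mathbb{C}$. Then $$F^{1:1;2}_{1:0;1}\left[\begin{matrix}\alpha: & \tfrac12\beta+2+i\,; & \tfrac12\beta-2-i,\ \tfrac12\alpha+1\,;\\ \beta: & -\,; & \tfrac12\alpha\,;\end{matrix}\ \tfrac12,\ \tfrac12\right] =\frac{(-1)^i\,2^{\alpha+3+i}}{\beta\,(i+1)!}\sum_{r=0}^{i}(-1)^r\binom{i}{r}\frac{\Gamma\!\left(\frac14\beta+\frac{r+1}{2}\right)}{\Gamma\!\left(\frac14\beta-i+\frac{r-1}{2}\right)}$$ and $$F^{1:1;2}_{1:0;1}\left[\begin{matrix}\alpha: & \tfrac12\beta+2-i\,; & \tfrac12\beta-2+i,\ \tfrac12\alpha+1\,;\\ \beta: & -\,; & \tfrac12\alpha\,;\end{matrix}\ \tfrac12,\ \tfrac12\right] =\frac{2^{\alpha+3-i}}{\beta}\sum_{r=0}^{i}\binom{i}{r}\frac{\Gamma\!\left(\frac14\beta+\frac{r+1}{2}\right)}{\Gamma\!\left(\frac14\beta+\frac{r-1}{2}\right)}.$$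
   Context: For $\lambda\in\mathbb{C}$ and $n\in\mathbb{N}_0$, $(\lambda)_0=1$ and $(\lambda)_n=\lambda(\lambda+1)\cdots(\lambda+n-1)$; $\Gamma$ is Euler's Gamma function and $\binom{i}{r}$ the binomial coefficient. The (generalized) Kampé de Fériet function is defined by $$F^{H:A;B}_{G:C;D}\left[\begin{matrix}(h_H): & (a_A)\,; & (b_B)\,;\\ (g_G): & (c_C)\,; & (d_D)\,;\end{matrix}\ x,\ y\right]=\sum_{m=0}^\infty\sum_{n=0}^\infty\frac{\prod_{j=1}^H(h_j)_{m+n}\prod_{j=1}^A(a_j)_m\prod_{j=1}^B(b_j)_n}{\prod_{j=1}^G(g_j)_{m+n}\prod_{j=1}^C(c_j)_m\prod_{j=1}^D(d_j)_n}\frac{x^m}{m!}\frac{y^n}{n!},$$ where a dash ''$-$'' denotes an empty list of parameters (empty products equal $1$). Parameters are tacitly assumed to be such that the double series converges, no denominator parameter is a non-positive integer, and all Gamma values appearing are finite. *)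

From Stdlib Require Import Reals List Arith Factorial.
From Coquelicot Require Import Coquelicot.
Open Scope C_scope.

Definition Cexp (z : C) : C :=
  (exp (Re z) * cos (Im z), exp (Re z) * sin (Im z))%R.

Definition Rcpow (a : R) (z : C) : C := Cexp (z * RtoC (ln a)).

Fixpoint poch (z : C) (n : nat) : C :=
  match n with
  | O => 1
  | S k => poch z k * (z + RtoC (INR k))
  end.

Definition poch_list (l : list C) (n : nat) : C :=
  fold_right (fun z acc => poch z n * acc) 1 l.

Fixpoint Csum (f : nat -> C) (N : nat) : C :=
  match N with
  | O => f O
  | S k => Csum f k + f (S k)
  end.

Definition Cis_lim_seq (u : nat -> C) (l : C) : Prop :=
  is_lim_seq (fun n => Re (u n)) (Re l) /\ is_lim_seq (fun n => Im (u n)) (Im l).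

(* Euler's Gamma function via the Euler-Gauss limit
   Gamma(z) = lim_n n! n^z / (z (z+1) ... (z+n)),  valid for z not in {0,-1,-2,...} *)
Definition gauss_seq (z : C) (n : nat) : C :=
  RtoC (INR (fact n)) * Rcpow (INR n) z / poch z (S n).
Definition CGamma (z : C) : C :=
  (real (Lim_seq (fun n => Re (gauss_seq z n))),
   real (Lim_seq (fun n => Im (gauss_seq z n)))).

Definition nonpos_int (z : C) : Prop := exists k : nat, z = - RtoC (INR k).

(* general term of the Kampe de Feriet double series *)
Definition kdf_term (h a b g c d : list C) (x y : C) (m n : nat) : C :=
  poch_list h (m + n) * poch_list a m * poch_list b n
  / (poch_list g (m + n) * poch_list c m * poch_list d n)
  * (x ^ m / RtoC (INR (fact m))) * (y ^ n / RtoC (INR (fact n))).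

Definition kdf_partial (h a b g c d : list C) (x y : C) (N : nat) : C :=
  Csum (fun m => Csum (fun n => kdf_term h a b g c d x y m n) N) N.

Definition binomR (i r : nat) : R := Binomial.C i r.

From Stdlib Require Import Reals List Factorial Lra Lia.
From Coquelicot Require Import Coquelicot.
Import ListNotations.
Open Scope C_scope.

(** Both identities are instances of one reduction. If [a + b = be], then
    [(al/2 + 1)_n / (al/2)_n = 1 + 2 n / al] and Vandermonde's identity collapse the diagonal
    [m + n = N] of [F[al : a ; b, al/2 + 1 ; be : - ; al/2 ; 1/2, 1/2]] to
    [(al)_N / N! * 2^-N * (1 + 2 b N / (al be))], so by the binomial series for [(1 - x)^-al]
    and its derivative at [x = 1/2] the series equals [2^al (1 + 2 b / be)]. The diagonal
    sums converge absolutely (their ratio tends to [1/2]), so the square partial sums have the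
    same limit. On the right-hand sides [Gamma (w + k) / Gamma w = (w)_k] turns the sums into
    binomial and alternating binomial sums of polynomials in [r], which give the same value.
    The Gamma function is the Euler-Gauss limit; it exists and does not vanish because the
    Gauss sequence is an infinite product with factors [1 + O(1/n^2)]. *)

Lemma Cexp_add (z w : C) : Cexp (z + w) = Cexp z * Cexp w.
Proof.
  destruct z as [a b], w as [c d]. unfold Cexp; simpl.
  rewrite exp_plus, cos_plus, sin_plus.
  apply injective_projections; simpl; ring.
Qed.

Lemma Cexp_RtoC (x : R) : Cexp (RtoC x) = RtoC (exp x).
Proof.
  unfold Cexp, RtoC; simpl. rewrite cos_0, sin_0.
  apply injective_projections; simpl; ring.
Qed.

Lemma Cexp_0 : Cexp 0 = 1.
Proof. rewrite Cexp_RtoC, exp_0. reflexivity. Qed.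

Lemma Cexp_opp_mul (z : C) : Cexp (- z) * Cexp z = 1.
Proof. rewrite <- Cexp_add. replace (- z + z) with (RtoC 0) by ring. apply Cexp_0. Qed.

Lemma Cexp_neq0 (z : C) : Cexp z <> 0.
Proof.
  intros H. apply C1_nz. rewrite <- (Cexp_opp_mul z), H. ring.
Qed.

Lemma Rcpow_add (a : R) (z w : C) : Rcpow a (z + w) = Rcpow a z * Rcpow a w.
Proof. unfold Rcpow. rewrite <- Cexp_add. f_equal. ring. Qed.

Lemma Rcpow_nat (a : R) (k : nat) : (0 < a)%R -> Rcpow a (RtoC (INR k)) = RtoC (a ^ k).
Proof.
  intros Ha. unfold Rcpow. rewrite <- RtoC_mult, Cexp_RtoC, <- (Rpower_pow k a Ha).
  reflexivity.
Qed.

Lemma Rcpow_add_nat (a : R) (z : C) (k : nat) : (0 < a)%R ->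
  Rcpow a (z + RtoC (INR k)) = Rcpow a z * RtoC (a ^ k).
Proof. intros Ha. rewrite Rcpow_add, Rcpow_nat by exact Ha. reflexivity. Qed.

Lemma Rcpow_add_1 (a : R) (z : C) : (0 < a)%R -> Rcpow a (z + 1) = Rcpow a z * RtoC a.
Proof.
  intros Ha. pose proof (Rcpow_add_nat a z 1 Ha) as H.
  rewrite pow_1 in H. simpl INR in H. exact H.
Qed.

Lemma Rcpow_neq0 (a : R) (z : C) : Rcpow a z <> 0.
Proof. apply Cexp_neq0. Qed.

Lemma RtoC_neq0 (x : R) : x <> 0%R -> RtoC x <> 0.
Proof. intros Hx H. apply Hx, RtoC_inj, H. Qed.

Lemma INR_fact_neq0_C (n : nat) : RtoC (INR (fact n)) <> 0.
Proof. apply RtoC_neq0, INR_fact_neq_0. Qed.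

Lemma INR_S_neq0_C (n : nat) : RtoC (INR (S n)) <> 0.
Proof. apply RtoC_neq0, not_0_INR. lia. Qed.

Lemma Csum_S (f : nat -> C) (N : nat) : Csum f (S N) = Csum f N + f (S N).
Proof. reflexivity. Qed.

Lemma Csum_ext_le (f g : nat -> C) (N : nat) :
  (forall k, (k <= N)%nat -> f k = g k) -> Csum f N = Csum g N.
Proof.
  induction N; intros H; simpl.
  - apply H; lia.
  - rewrite IHN by (intros; apply H; lia). rewrite H by lia. reflexivity.
Qed.

Lemma Csum_plus (f g : nat -> C) (N : nat) :
  Csum (fun k => f k + g k) N = Csum f N + Csum g N.
Proof. induction N; simpl; [reflexivity | rewrite IHN; ring]. Qed.

Lemma Csum_minus (f g : nat -> C) (N : nat) :
  Csum (fun k => f k - g k) N = Csum f N - Csum g N.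
Proof. induction N; simpl; [reflexivity | rewrite IHN; ring]. Qed.

Lemma Csum_scal (c : C) (f : nat -> C) (N : nat) :
  Csum (fun k => c * f k) N = c * Csum f N.
Proof. induction N; simpl; [reflexivity | rewrite IHN; ring]. Qed.

Lemma Csum_opp (f : nat -> C) (N : nat) : Csum (fun k => - f k) N = - Csum f N.
Proof. induction N; simpl; [reflexivity | rewrite IHN; ring]. Qed.

Lemma Csum_shift (f : nat -> C) (N : nat) :
  Csum f (S N) = f O + Csum (fun k => f (S k)) N.
Proof. induction N; simpl in *; [reflexivity | rewrite IHN; ring]. Qed.

Lemma Csum_RtoC (f : nat -> R) (N : nat) :
  Csum (fun k => RtoC (f k)) N = RtoC (sum_f_R0 f N).
Proof. induction N; simpl; [reflexivity | rewrite IHN, RtoC_plus; reflexivity]. Qed.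

Lemma Re_Csum (f : nat -> C) (N : nat) : Re (Csum f N) = sum_f_R0 (fun k => Re (f k)) N.
Proof. induction N; simpl; [reflexivity | rewrite <- IHN; reflexivity]. Qed.

Lemma Im_Csum (f : nat -> C) (N : nat) : Im (Csum f N) = sum_f_R0 (fun k => Im (f k)) N.
Proof. induction N; simpl; [reflexivity | rewrite <- IHN; reflexivity]. Qed.

Lemma Cmod_Csum_le (f : nat -> C) (N : nat) :
  (Cmod (Csum f N) <= sum_f_R0 (fun k => Cmod (f k)) N)%R.
Proof.
  induction N; simpl; [lra |].
  eapply Rle_trans; [apply Cmod_triangle | lra].
Qed.

Lemma Cmod_Csum_sub_le (f : nat -> C) (k N : nat) : (k <= N)%nat ->
  (Cmod (Csum f N - Csum f k)
   <= sum_f_R0 (fun n => Cmod (f n)) N - sum_f_R0 (fun n => Cmod (f n)) k)%R.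
Proof.
  induction 1.
  - replace (Csum f k - Csum f k) with (RtoC 0) by ring. rewrite Cmod_0. lra.
  - simpl. replace (Csum f m + f (S m) - Csum f k) with ((Csum f m - Csum f k) + f (S m)) by ring.
    eapply Rle_trans; [apply Cmod_triangle | lra].
Qed.

Lemma sum_f_R0_nonneg (f : nat -> R) (N : nat) :
  (forall n, 0 <= f n)%R -> (0 <= sum_f_R0 f N)%R.
Proof. intros Hf; induction N; simpl; [apply Hf | specialize (Hf (S N)); lra]. Qed.

Lemma sum_f_R0_le_mono (f : nat -> R) (k N : nat) :
  (forall n, 0 <= f n)%R -> (k <= N)%nat -> (sum_f_R0 f k <= sum_f_R0 f N)%R.
Proof. intros Hf; induction 1; [lra | simpl; specialize (Hf (S m)); lra]. Qed.

Lemma Csum_triangle_diag (t : nat -> nat -> C) (M : nat) :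
  Csum (fun m => Csum (fun n => t m n) (M - m)%nat) M
  = Csum (fun N => Csum (fun m => t m (N - m)%nat) N) M.
Proof.
  induction M; [reflexivity |].
  rewrite Csum_S, (Csum_S (fun N => Csum _ N)), <- IHM.
  rewrite (Csum_ext_le (fun m => Csum (fun n => t m n) (S M - m)%nat)
             (fun m => Csum (fun n => t m n) (M - m)%nat + t m (S M - m)%nat)).
  2:{ intros m Hm. replace (S M - m)%nat with (S (M - m)) by lia. reflexivity. }
  rewrite Csum_plus, (Csum_S (fun m => t m (S M - m)%nat)).
  replace (S M - S M)%nat with O by lia. simpl. ring.
Qed.

Lemma sum_f_R0_triangle_diag (t : nat -> nat -> R) (M : nat) :
  sum_f_R0 (fun m => sum_f_R0 (fun n => t m n) (M - m)%nat) M
  = sum_f_R0 (fun N => sum_f_R0 (fun m => t m (N - m)%nat) N) M.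
Proof.
  apply RtoC_inj. rewrite <- !Csum_RtoC.
  rewrite (Csum_ext_le _ (fun m => Csum (fun n => RtoC (t m n)) (M - m)%nat))
    by (intros; symmetry; apply Csum_RtoC).
  rewrite (Csum_ext_le (fun N => RtoC _) (fun N => Csum (fun m => RtoC (t m (N - m)%nat)) N))
    by (intros; symmetry; apply Csum_RtoC).
  apply Csum_triangle_diag.
Qed.

Lemma Re_sub (z w : C) : Re (z - w) = (Re z - Re w)%R.
Proof. unfold Re; simpl; ring. Qed.

Lemma Im_sub (z w : C) : Im (z - w) = (Im z - Im w)%R.
Proof. unfold Im; simpl; ring. Qed.

Lemma Rabs_Im_le_Cmod (z : C) : (Rabs (Im z) <= Cmod z)%R.
Proof. eapply Rle_trans; [apply Rmax_r | apply Rmax_Cmod]. Qed.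

Lemma Cmod_le_Rabs_Re_Im (z : C) : (Cmod z <= Rabs (Re z) + Rabs (Im z))%R.
Proof.
  pose proof (Rabs_pos (Re z)); pose proof (Rabs_pos (Im z)).
  unfold Cmod. rewrite <- (sqrt_pow2 (Rabs (Re z) + Rabs (Im z))) by lra.
  apply sqrt_le_1_alt.
  rewrite <- (pow2_abs (fst z)), <- (pow2_abs (snd z)). unfold Re, Im in *. nra.
Qed.

Lemma is_lim_seq_of_Rabs_sub (x : nat -> R) (l : R) :
  is_lim_seq (fun n => Rabs (x n - l)) 0%R -> is_lim_seq x l.
Proof.
  intros H. apply is_lim_seq_abs_0 in H.
  apply (is_lim_seq_plus' _ (fun _ => l) 0%R l) in H; [| apply is_lim_seq_const].
  rewrite Rplus_0_l in H. eapply is_lim_seq_ext; [| exact H]. intros; simpl; ring.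
Qed.

Lemma Cis_lim_seq_Cmod (u : nat -> C) (l : C) :
  Cis_lim_seq u l <-> is_lim_seq (fun n => Cmod (u n - l)) 0%R.
Proof.
  split.
  - intros [Hre Him].
    apply (is_lim_seq_minus' _ (fun _ => Re l) (Re l) (Re l)) in Hre; [| apply is_lim_seq_const].
    apply (is_lim_seq_minus' _ (fun _ => Im l) (Im l) (Im l)) in Him; [| apply is_lim_seq_const].
    rewrite Rminus_diag in Hre, Him.
    apply is_lim_seq_le_le with (u := fun _ => 0%R)
      (w := fun n => (Rabs (Re (u n) - Re l) + Rabs (Im (u n) - Im l))%R).
    + intros n; split; [apply Cmod_ge_0 |].
      rewrite <- Re_sub, <- Im_sub. apply Cmod_le_Rabs_Re_Im.
    + apply is_lim_seq_const.
    + apply is_lim_seq_abs_0 in Hre, Him.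
      pose proof (is_lim_seq_plus' _ _ _ _ Hre Him) as Hsum. rewrite Rplus_0_r in Hsum. exact Hsum.
  - intros H. split; apply is_lim_seq_of_Rabs_sub;
      apply is_lim_seq_le_le with (u := fun _ => 0%R) (w := fun n => Cmod (u n - l));
      try apply is_lim_seq_const; try exact H;
      intros n; split; try apply Rabs_pos.
    + rewrite <- Re_sub. apply re_le_Cmod.
    + rewrite <- Im_sub. apply Rabs_Im_le_Cmod.
Qed.

Lemma Cis_lim_seq_ext_loc (u v : nat -> C) (l : C) :
  (exists N, forall n, (N <= n)%nat -> u n = v n) -> Cis_lim_seq u l -> Cis_lim_seq v l.
Proof.
  intros [N HN] [Hre Him].
  split; [eapply (is_lim_seq_ext_loc (fun n => Re (u n)))
         | eapply (is_lim_seq_ext_loc (fun n => Im (u n)))];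
    eauto; exists N; intros n Hn; rewrite HN; auto.
Qed.

Lemma Cis_lim_seq_ext (u v : nat -> C) (l : C) :
  (forall n, u n = v n) -> Cis_lim_seq u l -> Cis_lim_seq v l.
Proof. intros H; apply Cis_lim_seq_ext_loc; exists O; auto. Qed.

Lemma Cis_lim_seq_const (c : C) : Cis_lim_seq (fun _ => c) c.
Proof. split; apply is_lim_seq_const. Qed.

Lemma Cis_lim_seq_plus (u v : nat -> C) (a b : C) :
  Cis_lim_seq u a -> Cis_lim_seq v b -> Cis_lim_seq (fun n => u n + v n) (a + b).
Proof. intros [H1 H2] [H3 H4]; split; simpl; apply is_lim_seq_plus'; auto. Qed.

Lemma Cis_lim_seq_mult (u v : nat -> C) (a b : C) :
  Cis_lim_seq u a -> Cis_lim_seq v b -> Cis_lim_seq (fun n => u n * v n) (a * b).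
Proof.
  intros [H1 H2] [H3 H4]; split; simpl.
  - apply is_lim_seq_minus'; apply is_lim_seq_mult'; auto.
  - apply is_lim_seq_plus'; apply is_lim_seq_mult'; auto.
Qed.

Lemma Cis_lim_seq_scal (c : C) (u : nat -> C) (a : C) :
  Cis_lim_seq u a -> Cis_lim_seq (fun n => c * u n) (c * a).
Proof. intros; apply Cis_lim_seq_mult; auto; apply Cis_lim_seq_const. Qed.

Lemma Cis_lim_seq_incr_n (u : nat -> C) (N : nat) (l : C) :
  Cis_lim_seq (fun n => u (n + N)%nat) l -> Cis_lim_seq u l.
Proof.
  intros [H1 H2]; split;
    [apply (is_lim_seq_incr_n (fun n => Re (u n)) N)
    | apply (is_lim_seq_incr_n (fun n => Im (u n)) N)];
    auto.
Qed.

Lemma Cis_lim_seq_incr_1 (u : nat -> C) (l : C) :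
  Cis_lim_seq (fun n => u (S n)) l -> Cis_lim_seq u l.
Proof.
  intros H; apply (Cis_lim_seq_incr_n u 1).
  eapply Cis_lim_seq_ext; [| exact H]. intros n; rewrite Nat.add_1_r; reflexivity.
Qed.

Lemma CGamma_of_lim (z L : C) : Cis_lim_seq (gauss_seq z) L -> CGamma z = L.
Proof.
  intros [H1 H2]. unfold CGamma.
  rewrite (is_lim_seq_unique _ _ H1), (is_lim_seq_unique _ _ H2). destruct L; reflexivity.
Qed.

Lemma is_lim_seq_sum_f_R0 (f : nat -> R) (l : R) :
  is_series f l -> is_lim_seq (fun N => sum_f_R0 f N) l.
Proof. intros H. apply is_lim_seq_ext with (sum_n f); [intros; apply sum_n_Reals | exact H]. Qed.

Lemma sum_f_R0_le_series (f : nat -> R) (l : R) :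
  (forall n, 0 <= f n)%R -> is_series f l -> forall n, (sum_f_R0 f n <= l)%R.
Proof.
  intros Hf Hs n. apply is_lim_seq_sum_f_R0 in Hs.
  apply (is_lim_seq_le_loc (fun _ => sum_f_R0 f n) (fun N => sum_f_R0 f N) (sum_f_R0 f n) l);
    [| apply is_lim_seq_const | exact Hs].
  exists n. intros N HN. apply sum_f_R0_le_mono; auto.
Qed.

Lemma ex_series_Rle (f g : nat -> R) :
  (forall n, Rabs (f n) <= g n)%R -> ex_series g -> ex_series f.
Proof. apply (@ex_series_le R_AbsRing R_CompleteNormedModule). Qed.

Lemma ex_series_ratio (g : nat -> R) (q : R) (N0 : nat) :
  (0 <= q < 1)%R -> (forall n, 0 <= g n)%R ->
  (forall n, (N0 <= n)%nat -> (g (S n) <= q * g n)%R) -> ex_series g.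
Proof.
  intros Hq Hg Hr.
  assert (Hgeom : forall n, (g (N0 + n)%nat <= g N0 * q ^ n)%R).
  { induction n; [rewrite Nat.add_0_r; simpl; lra |].
    replace (N0 + S n)%nat with (S (N0 + n)) by lia.
    eapply Rle_trans; [apply Hr; lia |]. simpl.
    replace (g N0 * (q * q ^ n))%R with (q * (g N0 * q ^ n))%R by ring.
    apply Rmult_le_compat_l; lra. }
  apply (ex_series_incr_n g N0), ex_series_Rle with (fun n => (q ^ n * g N0)%R).
  - intros n. rewrite Rabs_right, Rmult_comm by (apply Rle_ge, Hg). apply Hgeom.
  - apply ex_series_scal_r, ex_series_geom. rewrite Rabs_right; lra.
Qed.

Lemma exp_le_mono (x y : R) : (x <= y)%R -> (exp x <= exp y)%R.
Proof. intros [H | ->]; [left; apply exp_increasing, H | right; reflexivity]. Qed.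

Lemma exp_opp_mul (x : R) : (exp x * exp (- x) = 1)%R.
Proof. rewrite <- exp_plus, Rplus_opp_r. apply exp_0. Qed.

Lemma exp_sub_taylor1_bound (a : R) : (a <= /2)%R -> (0 <= exp a - 1 - a <= 2 * a ^ 2)%R.
Proof.
  intros Ha. pose proof (exp_ineq1_le a). pose proof (exp_ineq1_le (- a)).
  pose proof (exp_opp_mul a). pose proof (exp_pos a).
  assert (exp a * (1 - a) <= 1)%R by nra.
  assert ((exp a - 1 - a) * (1 - a) <= a ^ 2)%R by nra.
  split; nra.
Qed.

Lemma exp_le_2 (a : R) : (a <= /2)%R -> (exp a <= 2)%R.
Proof.
  intros Ha. pose proof (exp_sub_taylor1_bound (/2) ltac:(lra)).
  pose proof (exp_le_mono a (/2) Ha).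
  nra.
Qed.

Lemma exp_neg_2x_le (x : R) : (0 <= x <= /2)%R -> (exp (- (2 * x)) <= 1 - x)%R.
Proof.
  intros Hx. pose proof (exp_ineq1_le (2 * x)). pose proof (exp_opp_mul (2 * x)).
  pose proof (exp_pos (- (2 * x))). nra.
Qed.

Lemma one_sub_cos_bound (b : R) : (Rabs b <= /2)%R -> (0 <= 1 - cos b <= b ^ 2 / 2)%R.
Proof.
  intros Hb. pose proof PI2_1 as Hpi. pose proof (COS_bound b) as Hcos.
  apply Rabs_le_between in Hb.
  assert (H := cos_bound b 0 ltac:(lra) ltac:(lra)). cbn [Nat.mul Nat.add] in H.
  replace (cos_approx b 1) with (1 - b ^ 2 / 2)%R in H
    by (unfold cos_approx, cos_term; simpl; field).
  lra.
Qed.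

Lemma sin_sub_id_bound_nonneg (b : R) : (0 <= b <= /2)%R -> (Rabs (sin b - b) <= b ^ 2)%R.
Proof.
  intros Hb. pose proof PI2_1 as Hpi.
  assert (H := sin_bound b 0 ltac:(lra) ltac:(lra)). cbn [Nat.mul Nat.add] in H.
  replace (sin_approx b 1) with (b - b ^ 3 / 6)%R in H
    by (unfold sin_approx, sin_term; simpl; field).
  replace (sin_approx b 2) with (b - b ^ 3 / 6 + b ^ 5 / 120)%R in H
    by (unfold sin_approx, sin_term; simpl; field).
  assert (b ^ 3 <= b ^ 2)%R by nra. assert (b ^ 5 <= 20 * b ^ 3)%R by nra.
  apply Rabs_le. split; nra.
Qed.

Lemma sin_sub_id_bound (b : R) : (Rabs b <= /2)%R -> (Rabs (sin b - b) <= b ^ 2)%R.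
Proof.
  intros Hb. destruct (Rle_dec 0 b).
  - apply sin_sub_id_bound_nonneg. rewrite Rabs_right in Hb; lra.
  - rewrite Rabs_left in Hb by lra.
    pose proof (sin_sub_id_bound_nonneg (- b) ltac:(lra)) as H.
    rewrite sin_neg in H. replace (- sin b - - b)%R with (- (sin b - b))%R in H by ring.
    rewrite Rabs_Ropp in H. replace ((- b) ^ 2)%R with (b ^ 2)%R in H by ring. exact H.
Qed.

Lemma Cexp_sub_taylor1_bound (w : C) :
  (Cmod w <= /2)%R -> (Cmod (Cexp w - 1 - w) <= 4 * Cmod w ^ 2)%R.
Proof.
  intros Hw. pose proof (re_le_Cmod w). pose proof (Rabs_Im_le_Cmod w).
  rewrite Cmod2_alt.
  set (a := Re w) in *. set (b := Im w) in *.
  assert (Hb : (Rabs b <= /2)%R) by lra.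
  assert (Ha : (a <= /2)%R) by (pose proof (Rle_abs a); lra).
  pose proof (exp_sub_taylor1_bound a Ha). pose proof (exp_le_2 a Ha). pose proof (exp_pos a).
  pose proof (one_sub_cos_bound b Hb). pose proof (sin_sub_id_bound b Hb).
  assert (HRe : Re (Cexp w - 1 - w) = (exp a * (cos b - 1) + (exp a - 1 - a))%R)
    by (unfold Cexp, a, b, Re, Im; simpl; ring).
  assert (HIm : Im (Cexp w - 1 - w) = (exp a * (sin b - b) + (exp a - 1) * b)%R)
    by (unfold Cexp, a, b, Re, Im; simpl; ring).
  eapply Rle_trans; [apply Cmod_le_Rabs_Re_Im |]. rewrite HRe, HIm.
  assert (Hexp1 : (Rabs (exp a - 1) <= 2 * Rabs a)%R).
  { apply Rabs_le. rewrite <- (pow2_abs a) in *. pose proof (Rabs_pos a).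
    unfold Rabs in *; destruct (Rcase_abs a); nra. }
  assert (HAB : (2 * Rabs a * Rabs b <= a ^ 2 + b ^ 2)%R).
  { rewrite <- (pow2_abs a), <- (pow2_abs b). pose proof (pow2_ge_0 (Rabs a - Rabs b)). nra. }
  assert (Hre : (Rabs (exp a * (cos b - 1) + (exp a - 1 - a)) <= b ^ 2 + 2 * a ^ 2)%R).
  { eapply Rle_trans; [apply Rabs_triang |].
    rewrite Rabs_mult, (Rabs_right (exp a)), (Rabs_left1 (cos b - 1)),
      (Rabs_right (exp a - 1 - a)) by lra.
    nra. }
  assert (Him : (Rabs (exp a * (sin b - b) + (exp a - 1) * b) <= 3 * b ^ 2 + a ^ 2)%R).
  { eapply Rle_trans; [apply Rabs_triang |].
    rewrite !Rabs_mult, (Rabs_right (exp a)) by lra.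
    pose proof (Rabs_pos b). pose proof (Rabs_pos (exp a - 1)). pose proof (Rabs_pos (sin b - b)).
    assert (Rabs (exp a - 1) * Rabs b <= 2 * Rabs a * Rabs b)%R by nra.
    assert (exp a * Rabs (sin b - b) <= 2 * b ^ 2)%R by nra.
    lra. }
  lra.
Qed.

Lemma ln_le_sub_1 (y : R) : (0 < y)%R -> (ln y <= y - 1)%R.
Proof. intros Hy. pose proof (exp_ineq1_le (ln y)). rewrite exp_ln in H by exact Hy. lra. Qed.

Lemma ln_succ_sub_bounds (n : nat) : (1 <= n)%nat ->
  (/ INR (S n) <= ln (INR (S n)) - ln (INR n) <= / INR n)%R.
Proof.
  intros Hn. assert (H1 : (1 <= INR n)%R) by (apply (le_INR 1); auto).
  rewrite S_INR. split.
  - assert (H := ln_le_sub_1 (INR n / (INR n + 1))).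
    rewrite ln_div in H by lra.
    assert (Hp : (0 < INR n / (INR n + 1))%R) by (apply Rdiv_lt_0_compat; lra).
    specialize (H Hp).
    replace (INR n / (INR n + 1) - 1)%R with (- / (INR n + 1))%R in H by (field; lra). lra.
  - assert (H := ln_le_sub_1 ((INR n + 1) / INR n)).
    rewrite ln_div in H by lra.
    assert (Hp : (0 < (INR n + 1) / INR n)%R) by (apply Rdiv_lt_0_compat; lra).
    specialize (H Hp).
    replace ((INR n + 1) / INR n - 1)%R with (/ INR n)%R in H by (field; lra). lra.
Qed.

Lemma ex_series_inv_succ_sq : ex_series (fun n => (/ INR (S n) ^ 2)%R).
Proof.
  set (f := fun n => (/ INR (S n) ^ 2)%R).
  assert (Hf : forall n, (0 < f n)%R) by (intros; apply Rinv_0_lt_compat, pow_lt, lt_0_INR; lia).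
  assert (Htel : forall N, (sum_f_R0 f N <= 2 - / INR (S N))%R).
  { induction N; [unfold f; simpl; lra |].
    simpl sum_f_R0. unfold f at 2. rewrite (S_INR (S N)). rewrite S_INR in *.
    pose proof (pos_INR N).
    assert (/ (INR N + 1 + 1) ^ 2 + / (INR N + 1 + 1) <= / (INR N + 1))%R.
    { apply Rmult_le_reg_r with ((INR N + 1) * (INR N + 1 + 1) ^ 2)%R.
      - apply Rmult_lt_0_compat; [lra | apply pow_lt; lra].
      - field_simplify; lra. }
    lra. }
  destruct (ex_finite_lim_seq_incr (fun N => sum_f_R0 f N) 2) as [l Hl].
  - intros N. simpl. pose proof (Hf (S N)). lra.
  - intros N. pose proof (Htel N).
    assert (0 < / INR (S N))%R by (apply Rinv_0_lt_compat, lt_0_INR; lia).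
    lra.
  - exists l. change (is_lim_seq (sum_n f) l).
    apply (is_lim_seq_ext (fun N => sum_f_R0 f N)); [| exact Hl].
    intros n. symmetry. apply sum_n_Reals.
Qed.

Lemma is_lim_seq_of_summable_increments (x b : nat -> R) :
  (forall n, Rabs (x (S n) - x n) <= b n)%R -> ex_series b -> exists l : R, is_lim_seq x l.
Proof.
  intros Hb Hs.
  assert (Hd : ex_series (fun n => (x (S n) - x n)%R)).
  { apply ex_series_Rabs, ex_series_Rle with b; auto. intros n. rewrite Rabs_Rabsolu. apply Hb. }
  destruct Hd as [L HL]. apply is_lim_seq_sum_f_R0 in HL.
  exists (L + x O)%R. apply is_lim_seq_incr_1.
  apply (is_lim_seq_plus' _ (fun _ => x O) L (x O)) in HL; [| apply is_lim_seq_const].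
  eapply is_lim_seq_ext; [| exact HL]. intros n. simpl.
  induction n; simpl in *; lra.
Qed.

(** * Infinite products *)

Fixpoint sum_lt (f : nat -> R) (n : nat) : R :=
  match n with O => 0%R | S m => (sum_lt f m + f m)%R end.

Lemma sum_lt_bounds (f : nat -> R) (l : R) :
  (forall n, 0 <= f n)%R -> is_series f l -> forall n, (0 <= sum_lt f n <= l)%R.
Proof.
  intros Hf Hs n.
  assert (E : forall n, sum_lt f (S n) = sum_f_R0 f n)
    by (induction n0; simpl in *; [ring | rewrite <- IHn0; reflexivity]).
  destruct n; [simpl | rewrite E].
  - split; [lra |]. eapply Rle_trans; [apply Hf | apply (sum_f_R0_le_series f l Hf Hs 0)].
  - split; [apply sum_f_R0_nonneg | apply sum_f_R0_le_series]; auto.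
Qed.

Section InfiniteProduct.

Variables (u e : nat -> C) (sigma : R).
Hypothesis u_rec : forall n, u (S n) = u n * (1 + e n).
Hypothesis e_small : forall n, (Cmod (e n) <= /2)%R.
Hypothesis e_summable : is_series (fun n => Cmod (e n)) sigma.

Let f n := Cmod (e n).

Lemma Cmod_prod_upper (n : nat) : (Cmod (u n) <= Cmod (u O) * exp (sum_lt f n))%R.
Proof.
  induction n; simpl; [rewrite exp_0; lra |].
  rewrite u_rec, Cmod_mult, exp_plus.
  assert (Cmod (1 + e n) <= exp (f n))%R.
  { eapply Rle_trans; [apply Cmod_triangle |]. rewrite Cmod_1.
    pose proof (exp_ineq1_le (f n)). unfold f in *. lra. }
  rewrite <- Rmult_assoc.
  apply Rmult_le_compat; auto using Cmod_ge_0.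
Qed.

Lemma Cmod_prod_lower (n : nat) : (Cmod (u O) * exp (- (2 * sum_lt f n)) <= Cmod (u n))%R.
Proof.
  induction n; simpl; [rewrite Rmult_0_r, Ropp_0, exp_0; lra |].
  rewrite u_rec, Cmod_mult.
  replace (- (2 * (sum_lt f n + f n)))%R with (- (2 * sum_lt f n) + - (2 * f n))%R by ring.
  rewrite exp_plus, <- Rmult_assoc.
  assert (exp (- (2 * f n)) <= Cmod (1 + e n))%R.
  { eapply Rle_trans; [apply exp_neg_2x_le; split; [apply Cmod_ge_0 | apply e_small] |].
    pose proof (Cmod_triangle (1 + e n) (- e n)) as Ht.
    replace (1 + e n + - e n) with (RtoC 1) in Ht by ring. rewrite Cmod_1, Cmod_opp in Ht.
    unfold f; lra. }
  apply Rmult_le_compat; auto.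
  - apply Rmult_le_pos; [apply Cmod_ge_0 | left; apply exp_pos].
  - left; apply exp_pos.
Qed.

Lemma Cis_lim_seq_infinite_product : u O <> 0 -> exists L : C, L <> 0 /\ Cis_lim_seq u L.
Proof.
  intros Hu0.
  pose proof (sum_lt_bounds f sigma (fun n => Cmod_ge_0 (e n)) e_summable) as Hpart.
  set (M := (Cmod (u O) * exp sigma)%R).
  assert (HM : forall n, (Cmod (u n) <= M)%R).
  { intros n. eapply Rle_trans; [apply Cmod_prod_upper |].
    apply Rmult_le_compat_l; [apply Cmod_ge_0 | apply exp_le_mono, Hpart]. }
  set (m := (Cmod (u O) * exp (- (2 * sigma)))%R).
  assert (Hm0 : (0 < m)%R) by (apply Rmult_lt_0_compat; [apply Cmod_gt_0 | apply exp_pos]; auto).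
  assert (Hm : forall n, (m <= Cmod (u n))%R).
  { intros n. eapply Rle_trans; [| apply Cmod_prod_lower].
    apply Rmult_le_compat_l; [apply Cmod_ge_0 |]. apply exp_le_mono. pose proof (Hpart n). lra. }
  assert (Hdiff : forall n, (Cmod (u (S n) - u n) <= M * f n)%R).
  { intros n. rewrite u_rec. replace (u n * (1 + e n) - u n) with (u n * e n) by ring.
    rewrite Cmod_mult. apply Rmult_le_compat_r; [apply Cmod_ge_0 | apply HM]. }
  assert (HMs : ex_series (fun n => (M * f n)%R))
    by exact (ex_series_scal_l M f (ex_intro _ sigma e_summable)).
  destruct (is_lim_seq_of_summable_increments (fun n => Re (u n)) (fun n => (M * f n)%R))
    with (2 := HMs) as [lr Hr].
  { intros n. rewrite <- Re_sub. eapply Rle_trans; [apply re_le_Cmod | apply Hdiff]. }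
  destruct (is_lim_seq_of_summable_increments (fun n => Im (u n)) (fun n => (M * f n)%R))
    with (2 := HMs) as [li Hi].
  { intros n. rewrite <- Im_sub. eapply Rle_trans; [apply Rabs_Im_le_Cmod | apply Hdiff]. }
  exists (lr, li). split; [| split; auto].
  intros H0. assert (Hc : Cis_lim_seq u 0) by (rewrite <- H0; split; auto).
  apply Cis_lim_seq_Cmod in Hc.
  assert (m <= 0)%R; [| lra].
  apply (is_lim_seq_le (fun _ => m) (fun n => Cmod (u n - 0)) m 0%R);
    [| apply is_lim_seq_const | exact Hc].
  intros n. replace (u n - 0) with (u n) by ring. apply Hm.
Qed.

End InfiniteProduct.

(** * Pochhammer symbols and the Gamma function *)

Lemma add_nat_neq0 (z : C) (k : nat) : ~ nonpos_int z -> z + RtoC (INR k) <> 0.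
Proof.
  intros Hz H. apply Hz. exists k.
  replace z with (z + RtoC (INR k) - RtoC (INR k)) by ring. rewrite H. ring.
Qed.

Lemma not_nonpos_int_neq0 (z : C) : ~ nonpos_int z -> z <> 0.
Proof.
  intros Hz. pose proof (add_nat_neq0 z 0 Hz) as H. simpl in H. rewrite Cplus_0_r in H. exact H.
Qed.

Lemma not_nonpos_int_add_nat (w : C) (k : nat) :
  ~ nonpos_int w -> ~ nonpos_int (w + RtoC (INR k)).
Proof.
  intros Hw [m Hm]. apply Hw. exists (m + k)%nat.
  rewrite plus_INR, RtoC_plus.
  replace w with (w + RtoC (INR k) - RtoC (INR k)) by ring. rewrite Hm. ring.
Qed.

Lemma poch_neq0 (z : C) (n : nat) : ~ nonpos_int z -> poch z n <> 0.
Proof.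
  intros Hz. induction n; simpl; [apply C1_nz |].
  apply Cmult_neq_0; auto using add_nat_neq0.
Qed.

Lemma poch_S_left (z : C) (n : nat) : poch z (S n) = z * poch (z + 1) n.
Proof.
  induction n; [simpl; ring |].
  change (poch z (S (S n))) with (poch z (S n) * (z + RtoC (INR (S n)))).
  change (poch (z + 1) (S n)) with (poch (z + 1) n * (z + 1 + RtoC (INR n))).
  rewrite IHn, S_INR, RtoC_plus. ring.
Qed.

Lemma Cmod_add_RtoC_ge (z : C) (x : R) : (Rabs x - Cmod z <= Cmod (z + RtoC x))%R.
Proof.
  pose proof (Cmod_triangle (z + RtoC x) (- z)) as H.
  replace (z + RtoC x + - z) with (RtoC x) in H by ring.
  rewrite Cmod_R, Cmod_opp in H. lra.
Qed.

Lemma Cmod_add_INR_ge (z : C) (n : nat) : (INR n - Cmod z <= Cmod (z + RtoC (INR n)))%R.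
Proof. rewrite <- (Rabs_right (INR n)) at 1 by (apply Rle_ge, pos_INR). apply Cmod_add_RtoC_ge. Qed.

Definition log_step (n : nat) : R := ln (INR (S n)) - ln (INR n).

Definition gauss_err (z : C) (n : nat) : C :=
  RtoC (INR (S n)) * Cexp (z * RtoC (log_step n)) / (z + RtoC (INR (S n))) - 1.

Lemma gauss_seq_S (z : C) (n : nat) : ~ nonpos_int z ->
  gauss_seq z (S n) = gauss_seq z n * (1 + gauss_err z n).
Proof.
  intros Hz. unfold gauss_seq, gauss_err, Rcpow.
  pose proof (poch_neq0 z (S n) Hz). pose proof (add_nat_neq0 z (S n) Hz).
  change (poch z (S (S n))) with (poch z (S n) * (z + RtoC (INR (S n)))).
  change (fact (S n)) with (S n * fact n)%nat. rewrite mult_INR, RtoC_mult.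
  replace (z * RtoC (ln (INR (S n))))
    with (z * RtoC (ln (INR n)) + z * RtoC (log_step n))
    by (unfold log_step; rewrite RtoC_minus; ring).
  rewrite Cexp_add. field. auto.
Qed.

Section GaussError.

Variables (z : C) (n : nat).
Hypothesis n_pos : (1 <= n)%nat.
Hypothesis n_large : (2 * Cmod z + 2 <= INR n)%R.

Lemma gauss_err_eq (w := z * RtoC (log_step n)) : gauss_err z n
  = (RtoC (INR (S n)) * (Cexp w - 1 - w) + z * RtoC (INR (S n) * log_step n - 1))
    / (z + RtoC (INR (S n))).
Proof.
  assert (z + RtoC (INR (S n)) <> 0).
  { intros H. pose proof (Cmod_add_INR_ge z (S n)). rewrite H, Cmod_0, S_INR in *.
    pose proof (Cmod_ge_0 z). lra. }
  unfold gauss_err, w. rewrite RtoC_minus, RtoC_mult. field. auto.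
Qed.

Lemma gauss_err_num_bound (w := z * RtoC (log_step n)) :
  (Cmod (RtoC (INR (S n)) * (Cexp w - 1 - w) + z * RtoC (INR (S n) * log_step n - 1))
   <= (Cmod z + 8 * Cmod z ^ 2) / INR n)%R.
Proof.
  set (t := log_step n) in *.
  assert (Hn1 : (1 <= INR n)%R) by (apply (le_INR 1); auto).
  pose proof (Cmod_ge_0 z).
  destruct (ln_succ_sub_bounds n n_pos) as [Ht1 Ht2]. change (ln _ - ln _)%R with t in Ht1, Ht2.
  rewrite S_INR in *.
  assert (Ht0 : (0 < t)%R) by (eapply Rlt_le_trans; [| exact Ht1]; apply Rinv_0_lt_compat; lra).
  assert (Hw : Cmod w = (Cmod z * t)%R) by (unfold w; rewrite Cmod_mult, Cmod_R, Rabs_right; lra).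
  assert (Hwt : (Cmod z * t <= Cmod z / INR n)%R) by (apply Rmult_le_compat_l; auto).
  assert (Hw2 : (Cmod w <= /2)%R).
  { rewrite Hw. eapply Rle_trans; [exact Hwt |].
    apply Rmult_le_reg_r with (INR n); [lra |]. field_simplify; lra. }
  pose proof (Cexp_sub_taylor1_bound w Hw2) as HT. rewrite Hw in HT.
  assert (Hs : (0 <= (INR n + 1) * t - 1 <= / INR n)%R).
  { split.
    - apply Rmult_le_compat_l with (r := (INR n + 1)%R) in Ht1; [| lra].
      rewrite Rinv_r in Ht1 by lra. lra.
    - apply Rmult_le_compat_l with (r := (INR n + 1)%R) in Ht2; [| lra].
      replace ((INR n + 1) * / INR n)%R with (1 + / INR n)%R in Ht2 by (field; lra). lra. }
  eapply Rle_trans; [apply Cmod_triangle |]. rewrite !Cmod_mult, !Cmod_R.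
  rewrite (Rabs_right (INR n + 1)), (Rabs_right ((INR n + 1) * t - 1)) by lra.
  assert (H1 : ((INR n + 1) * Cmod (Cexp w - 1 - w) <= 8 * Cmod z ^ 2 / INR n)%R).
  { assert (((Cmod z * t) ^ 2 <= (Cmod z / INR n) ^ 2)%R)
      by (apply pow_incr; split; [apply Rmult_le_pos |]; lra).
    apply Rle_trans with ((INR n + 1) * (4 * (Cmod z / INR n) ^ 2))%R;
      [apply Rmult_le_compat_l; lra |].
    apply Rmult_le_reg_r with (INR n ^ 2)%R; [apply pow_lt; lra |].
    field_simplify; try lra. pose proof (pow2_ge_0 (Cmod z)). nra. }
  assert (H2 : (Cmod z * ((INR n + 1) * t - 1) <= Cmod z / INR n)%R)
    by (apply Rmult_le_compat_l; lra).
  replace ((Cmod z + 8 * Cmod z ^ 2) / INR n)%R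
    with (8 * Cmod z ^ 2 / INR n + Cmod z / INR n)%R by (field; lra).
  lra.
Qed.

Lemma gauss_err_bound : (Cmod (gauss_err z n) <= 2 * (Cmod z + 8 * Cmod z ^ 2) / INR n ^ 2)%R.
Proof.
  assert (Hn1 : (1 <= INR n)%R) by (apply (le_INR 1); auto).
  assert (Hden : (INR n / 2 <= Cmod (z + RtoC (INR (S n))))%R).
  { pose proof (Cmod_add_INR_ge z (S n)). rewrite S_INR in *. lra. }
  rewrite gauss_err_eq, Cmod_div.
  2:{ intros H. rewrite H, Cmod_0 in Hden. lra. }
  apply Rle_trans with (((Cmod z + 8 * Cmod z ^ 2) / INR n) / (INR n / 2))%R.
  - unfold Rdiv at 1. apply Rmult_le_compat; auto using Cmod_ge_0, gauss_err_num_bound.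
    + left; apply Rinv_0_lt_compat. lra.
    + apply Rinv_le_contravar; lra.
  - right. field. lra.
Qed.

End GaussError.

Lemma gauss_seq_neq0 (z : C) (n : nat) : ~ nonpos_int z -> gauss_seq z n <> 0.
Proof.
  intros Hz H. pose proof (poch_neq0 z (S n) Hz).
  assert (E : RtoC (INR (fact n)) * Rcpow (INR n) z = gauss_seq z n * poch z (S n))
    by (unfold gauss_seq; field; auto).
  rewrite H, Cmult_0_l in E. revert E.
  apply Cmult_neq_0; [apply INR_fact_neq0_C | apply Rcpow_neq0].
Qed.

Lemma gauss_seq_converges (z : C) : ~ nonpos_int z ->
  exists L : C, L <> 0 /\ Cis_lim_seq (gauss_seq z) L.
Proof.
  intros Hz.
  set (K := (2 * (Cmod z + 8 * Cmod z ^ 2))%R).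
  assert (HK : (0 <= K)%R)
    by (pose proof (Cmod_ge_0 z); pose proof (pow2_ge_0 (Cmod z)); unfold K; lra).
  destruct (INR_unbounded (2 * Cmod z + 2 + 2 * K)) as [N1 HN1].
  pose proof (Cmod_ge_0 z).
  assert (HN1' : (1 <= N1)%nat) by (destruct N1; [simpl in HN1; lra | lia]).
  assert (Hb : forall j, (Cmod (gauss_err z (j + N1)) <= K / INR (j + N1) ^ 2)%R).
  { intros j. apply gauss_err_bound; [lia |]. rewrite plus_INR. pose proof (pos_INR j). lra. }
  assert (HjN : forall j, (INR (S j) <= INR (j + N1) /\ 1 <= INR N1 <= INR (j + N1))%R)
    by (intros j; repeat split; try apply (le_INR 1); try apply le_INR; lia).
  assert (Hsum : ex_series (fun j => Cmod (gauss_err z (j + N1)))).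
  { apply ex_series_Rle with (fun j => (K * / INR (S j) ^ 2)%R).
    - intros j. rewrite Rabs_right by (apply Rle_ge, Cmod_ge_0).
      eapply Rle_trans; [apply Hb |]. apply Rmult_le_compat_l; auto.
      destruct (HjN j) as [H1 _]. assert (0 < INR (S j))%R by (apply lt_0_INR; lia).
      apply Rinv_le_contravar; [apply pow_lt; lra | apply pow_incr; lra].
    - exact (ex_series_scal_l K _ ex_series_inv_succ_sq). }
  destruct Hsum as [sigma Hsigma].
  destruct (Cis_lim_seq_infinite_product (fun j => gauss_seq z (j + N1))
              (fun j => gauss_err z (j + N1)) sigma) as [L [HL0 HL]]; auto.
  - intros j. apply gauss_seq_S, Hz.
  - intros j. eapply Rle_trans; [apply Hb |].
    destruct (HjN j) as [_ H2].
    apply Rmult_le_reg_r with (INR (j + N1) ^ 2)%R; [apply pow_lt; lra |].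
    unfold Rdiv. rewrite Rmult_assoc, Rinv_l by (apply pow_nonzero; lra).
    simpl. nra.
  - apply gauss_seq_neq0, Hz.
  - exists L. split; auto. apply (Cis_lim_seq_incr_n _ N1), HL.
Qed.

Lemma is_lim_seq_const_div_INR (c : R) : is_lim_seq (fun n => (c / INR n)%R) 0%R.
Proof.
  rewrite <- (Rmult_0_r c).
  apply (is_lim_seq_scal_l (fun n => (/ INR n)%R) c 0%R).
  replace (Finite 0) with (Rbar_inv p_infty) by reflexivity.
  apply is_lim_seq_inv; [apply is_lim_seq_INR | discriminate].
Qed.

Lemma Cis_lim_seq_INR_div_shift (z : C) :
  Cis_lim_seq (fun n => RtoC (INR n) / (z + RtoC (INR (S n)))) 1.
Proof.
  apply Cis_lim_seq_Cmod.
  destruct (INR_unbounded (2 * Cmod z + 2)) as [N1 HN1].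
  pose proof (Cmod_ge_0 z).
  apply is_lim_seq_le_le_loc with (u := fun _ => 0%R) (w := fun n => (2 * (Cmod z + 1) / INR n)%R).
  - exists N1. intros n Hn. split; [apply Cmod_ge_0 |].
    assert (HnN : (INR N1 <= INR n)%R) by (apply le_INR; lia).
    assert (Hden : (INR n / 2 <= Cmod (z + RtoC (INR (S n))))%R)
      by (pose proof (Cmod_add_INR_ge z (S n)); rewrite S_INR in *; lra).
    assert (Hq : z + RtoC (INR (S n)) <> 0) by (intros H0; rewrite H0, Cmod_0 in Hden; lra).
    replace (RtoC (INR n) / (z + RtoC (INR (S n))) - 1) with (- (z + 1) / (z + RtoC (INR (S n)))).
    2:{ rewrite S_INR, RtoC_plus in *. field. auto. }
    rewrite Cmod_div, Cmod_opp by auto.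
    assert (Cmod (z + 1) <= Cmod z + 1)%R
      by (eapply Rle_trans; [apply Cmod_triangle | rewrite Cmod_1; lra]).
    apply Rle_trans with ((Cmod z + 1) / (INR n / 2))%R.
    + apply Rmult_le_compat; auto using Cmod_ge_0.
      * left; apply Rinv_0_lt_compat. lra.
      * apply Rinv_le_contravar; lra.
    + right. field. lra.
  - apply is_lim_seq_const.
  - apply is_lim_seq_const_div_INR.
Qed.

Lemma gauss_seq_succ (z : C) (n : nat) : ~ nonpos_int z -> (1 <= n)%nat ->
  gauss_seq (z + 1) n = z * gauss_seq z n * (RtoC (INR n) / (z + RtoC (INR (S n)))).
Proof.
  intros Hz Hn. unfold gauss_seq.
  assert (E1 : Rcpow (INR n) 1 = RtoC (INR n)).
  { pose proof (Rcpow_nat (INR n) 1 ltac:(apply lt_0_INR; lia)) as H1.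
    rewrite pow_1 in H1. exact H1. }
  rewrite Rcpow_add, E1.
  pose proof (poch_neq0 z (S (S n)) Hz) as Hp. rewrite poch_S_left in Hp.
  pose proof (add_nat_neq0 z (S n) Hz). pose proof (not_nonpos_int_neq0 z Hz).
  assert (E : poch (z + 1) (S n) = poch (z + 1) n * (z + RtoC (INR (S n))))
    by (change (poch (z + 1) (S n)) with (poch (z + 1) n * (z + 1 + RtoC (INR n)));
        rewrite S_INR, RtoC_plus; ring).
  rewrite (poch_S_left z n), E. rewrite E in Hp. field. repeat split; auto.
  intros Hpz. apply Hp. rewrite Hpz. ring.
Qed.

Lemma CGamma_succ (z : C) : ~ nonpos_int z -> CGamma (z + 1) = z * CGamma z.
Proof.
  intros Hz. destruct (gauss_seq_converges z Hz) as [L [_ HL]].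
  rewrite (CGamma_of_lim z L HL). apply CGamma_of_lim.
  rewrite <- (Cmult_1_r (z * L)).
  apply Cis_lim_seq_ext_loc
    with (u := fun n => z * gauss_seq z n * (RtoC (INR n) / (z + RtoC (INR (S n))))).
  - exists 1%nat. intros n Hn. symmetry. apply gauss_seq_succ; auto.
  - apply Cis_lim_seq_mult; [apply Cis_lim_seq_scal, HL | apply Cis_lim_seq_INR_div_shift].
Qed.

Lemma CGamma_neq0 (w : C) : ~ nonpos_int w -> CGamma w <> 0.
Proof.
  intros Hw. destruct (gauss_seq_converges w Hw) as [L [HL0 HL]].
  rewrite (CGamma_of_lim w L HL). exact HL0.
Qed.

Lemma CGamma_add_nat_div (w : C) (k : nat) : ~ nonpos_int w ->
  CGamma (w + RtoC (INR k)) / CGamma w = poch w k.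
Proof.
  intros Hw. pose proof (CGamma_neq0 w Hw).
  induction k.
  - simpl. rewrite Cplus_0_r. field. auto.
  - replace (w + RtoC (INR (S k))) with ((w + RtoC (INR k)) + 1)
      by (rewrite S_INR, RtoC_plus; ring).
    rewrite CGamma_succ by (apply not_nonpos_int_add_nat, Hw).
    simpl. rewrite <- IHk. field. auto.
Qed.

(** * Binomial coefficients [(a)_n / n!] and the binomial series *)

(** The coefficient of [x^n] in [(1 - x)^(-a)]. *)
Definition nbinom (a : C) (n : nat) : C := poch a n / RtoC (INR (fact n)).

Lemma nbinom_0 (a : C) : nbinom a 0 = 1.
Proof. unfold nbinom. simpl. field. Qed.

Lemma nbinom_S_mul (a : C) (n : nat) :
  RtoC (INR (S n)) * nbinom a (S n) = a * nbinom (a + 1) n.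
Proof.
  unfold nbinom. rewrite poch_S_left.
  change (fact (S n)) with (S n * fact n)%nat. rewrite mult_INR, RtoC_mult.
  pose proof (INR_S_neq0_C n). pose proof (INR_fact_neq0_C n). field. auto.
Qed.

Lemma nbinom_S_rec (a : C) (n : nat) :
  RtoC (INR (S n)) * nbinom a (S n) = (a + RtoC (INR n)) * nbinom a n.
Proof.
  unfold nbinom. change (poch a (S n)) with (poch a n * (a + RtoC (INR n))).
  change (fact (S n)) with (S n * fact n)%nat. rewrite mult_INR, RtoC_mult.
  pose proof (INR_S_neq0_C n). pose proof (INR_fact_neq0_C n). field. auto.
Qed.

Lemma Cmult_cancel_l (c x y : C) : c <> 0 -> c * x = c * y -> x = y.
Proof.
  intros Hc H. replace x with (/ c * (c * x)) by (field; exact Hc).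
  rewrite H. field; exact Hc.
Qed.

(** Both sides satisfy the recurrence [(N+1) s_(N+1)(a,b) = a s_N(a+1,b) + b s_N(a,b+1)]. *)
Lemma Csum_nbinom_vandermonde (a b : C) (N : nat) :
  Csum (fun m => nbinom a m * nbinom b (N - m)) N = nbinom (a + b) N.
Proof.
  revert a b. induction N; intros a b.
  - simpl. rewrite !nbinom_0. ring.
  - apply (Cmult_cancel_l (RtoC (INR (S N)))); [apply INR_S_neq0_C |].
    rewrite nbinom_S_mul, <- Csum_scal.
    rewrite (Csum_ext_le _ (fun m => RtoC (INR m) * (nbinom a m * nbinom b (S N - m))
                                  + RtoC (INR (S N - m)) * (nbinom a m * nbinom b (S N - m)))).
    2:{ intros m Hm. rewrite <- Cmult_plus_distr_r, <- RtoC_plus, <- plus_INR.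
        replace (m + (S N - m))%nat with (S N) by lia. reflexivity. }
    rewrite Csum_plus.
    assert (Ha : Csum (fun m => RtoC (INR m) * (nbinom a m * nbinom b (S N - m))) (S N)
                 = a * nbinom (a + 1 + b) N).
    { rewrite Csum_shift. change (INR 0) with 0%R. rewrite Cmult_0_l, Cplus_0_l.
      rewrite <- IHN, <- Csum_scal. apply Csum_ext_le. intros m Hm.
      replace (S N - S m)%nat with (N - m)%nat by lia.
      rewrite Cmult_assoc, nbinom_S_mul. ring. }
    assert (Hb : Csum (fun m => RtoC (INR (S N - m)) * (nbinom a m * nbinom b (S N - m))) (S N)
                 = b * nbinom (a + (b + 1)) N).
    { rewrite Csum_S. rewrite Nat.sub_diag. change (INR 0) with 0%R. rewrite Cmult_0_l, Cplus_0_r.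
      rewrite <- IHN, <- Csum_scal. apply Csum_ext_le. intros m Hm.
      replace (S N - m)%nat with (S (N - m)) by lia.
      transitivity (nbinom a m * (RtoC (INR (S (N - m))) * nbinom b (S (N - m)))); [ring |].
      rewrite nbinom_S_mul. ring. }
    rewrite Ha, Hb. replace (a + 1 + b) with (a + b + 1) by ring.
    replace (a + (b + 1)) with (a + b + 1) by ring. ring.
Qed.

Lemma Csum_nbinom_vandermonde_weighted (a b : C) (N : nat) :
  (a + b) * Csum (fun m => RtoC (INR (N - m)) * (nbinom a m * nbinom b (N - m))) N
  = b * (RtoC (INR N) * nbinom (a + b) N).
Proof.
  destruct N as [| N]; [simpl; ring |].
  rewrite Csum_S, Nat.sub_diag. change (INR 0) with 0%R. rewrite Cmult_0_l, Cplus_0_r.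
  rewrite (Csum_ext_le _ (fun m => b * (nbinom a m * nbinom (b + 1) (N - m)))).
  2:{ intros m Hm. replace (S N - m)%nat with (S (N - m)) by lia.
      transitivity (nbinom a m * (RtoC (INR (S (N - m))) * nbinom b (S (N - m)))); [ring |].
      rewrite nbinom_S_mul. ring. }
  rewrite Csum_scal, Csum_nbinom_vandermonde, nbinom_S_mul.
  replace (a + (b + 1)) with (a + b + 1) by ring. ring.
Qed.

Fixpoint rpoch (c : R) (n : nat) : R :=
  match n with O => 1%R | S k => (rpoch c k * (c + INR k))%R end.

Definition rnbinom (c : R) (n : nat) : R := (rpoch c n / INR (fact n))%R.

Lemma nbinom_RtoC (c : R) (n : nat) : nbinom (RtoC c) n = RtoC (rnbinom c n).
Proof.
  assert (E : poch (RtoC c) n = RtoC (rpoch c n))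
    by (induction n; simpl; [reflexivity | rewrite IHn, RtoC_mult, RtoC_plus; reflexivity]).
  unfold nbinom, rnbinom. rewrite E, RtoC_div by apply INR_fact_neq_0. reflexivity.
Qed.

Lemma rnbinom_nonneg (c : R) (n : nat) : (0 <= c)%R -> (0 <= rnbinom c n)%R.
Proof.
  intros Hc. apply Rmult_le_pos; [| left; apply Rinv_0_lt_compat, INR_fact_lt_0].
  induction n; simpl; [lra |]. apply Rmult_le_pos; auto. pose proof (pos_INR n); lra.
Qed.

Lemma rnbinom_S (c : R) (n : nat) :
  rnbinom c (S n) = (rnbinom c n * ((c + INR n) / INR (S n)))%R.
Proof.
  unfold rnbinom. simpl rpoch. change (fact (S n)) with (S n * fact n)%nat. rewrite mult_INR.
  pose proof (INR_fact_neq_0 n). assert (INR (S n) <> 0)%R by (apply not_0_INR; lia).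
  field. auto.
Qed.

Lemma sum_rnbinom_vandermonde (c d : R) (N : nat) :
  sum_f_R0 (fun m => (rnbinom c m * rnbinom d (N - m))%R) N = rnbinom (c + d) N.
Proof.
  apply RtoC_inj. rewrite <- Csum_RtoC, <- nbinom_RtoC, RtoC_plus, <- Csum_nbinom_vandermonde.
  apply Csum_ext_le. intros m _. rewrite RtoC_mult, !nbinom_RtoC. reflexivity.
Qed.

Lemma Cmod_nbinom_le (z : C) (n : nat) : (Cmod (nbinom z n) <= rnbinom (Cmod z) n)%R.
Proof.
  assert (Hpoch : (Cmod (poch z n) <= rpoch (Cmod z) n)%R).
  { induction n; simpl; [rewrite Cmod_1; lra |].
    rewrite Cmod_mult. apply Rmult_le_compat; auto using Cmod_ge_0.
    eapply Rle_trans; [apply Cmod_triangle |].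
    rewrite Cmod_R, Rabs_right by (apply Rle_ge, pos_INR). lra. }
  unfold nbinom, rnbinom. rewrite Cmod_div, Cmod_R, Rabs_right
    by (apply INR_fact_neq0_C || apply Rle_ge, pos_INR).
  apply Rmult_le_compat_r; [left; apply Rinv_0_lt_compat, INR_fact_lt_0 | exact Hpoch].
Qed.

Lemma ex_series_rnbinom_geom (c q : R) : (0 <= c)%R -> (0 <= q < 1)%R ->
  ex_series (fun n => (rnbinom c n * q ^ n)%R).
Proof.
  intros Hc Hq.
  set (q' := ((1 + q) / 2)%R).
  destruct (INR_unbounded ((c * q + 1) / (q' - q))) as [N0 HN0].
  apply (ex_series_ratio _ q' N0); [unfold q'; lra | |].
  - intros n. apply Rmult_le_pos; [apply rnbinom_nonneg; auto | apply pow_le; lra].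
  - intros n Hn. rewrite rnbinom_S. simpl pow.
    assert (HnN : (INR N0 <= INR n)%R) by (apply le_INR; auto).
    assert (Hqq : (0 < q' - q)%R) by (unfold q'; lra).
    assert (Hr : ((c + INR n) / INR (S n) * q <= q')%R).
    { assert (c * q + 1 <= INR n * (q' - q))%R.
      { apply Rmult_le_reg_r with (/ (q' - q))%R; [apply Rinv_0_lt_compat; lra |].
        rewrite Rmult_assoc, Rinv_r by lra. unfold Rdiv in HN0. lra. }
      rewrite S_INR. apply Rmult_le_reg_r with (INR n + 1)%R; [pose proof (pos_INR n); lra |].
      field_simplify; [unfold q' in *; nra | pose proof (pos_INR n); lra]. }
    pose proof (rnbinom_nonneg c n Hc). pose proof (pow_le q n ltac:(lra)).
    replace (rnbinom c n * ((c + INR n) / INR (S n)) * (q * q ^ n))%R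
      with ((rnbinom c n * q ^ n) * ((c + INR n) / INR (S n) * q))%R by ring.
    rewrite (Rmult_comm q'). apply Rmult_le_compat_l; [apply Rmult_le_pos |]; auto.
Qed.

Lemma CV_radius_gt_of_nbinom_bound (al : C) (a : nat -> R) (x : R) :
  (forall n, Rabs (a n) <= Cmod (nbinom al n))%R -> (Rabs x < 1)%R ->
  Rbar_lt (Rabs x) (CV_radius a).
Proof.
  intros Ha Hx. set (q := ((Rabs x + 1) / 2)%R). pose proof (Rabs_pos x).
  apply Rbar_lt_le_trans with q; [simpl; unfold q; lra |].
  apply (proj1 (Lub_Rbar_correct _)). unfold CV_disk.
  apply ex_series_Rle with (fun n => (rnbinom (Cmod al) n * q ^ n)%R).
  - intros n.
    rewrite Rabs_Rabsolu, Rabs_mult, (Rabs_right (q ^ n)) by (apply Rle_ge, pow_le; unfold q; lra).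
    apply Rmult_le_compat_r; [apply pow_le; unfold q; lra |].
    eapply Rle_trans; [apply Ha | apply Cmod_nbinom_le].
  - apply ex_series_rnbinom_geom; [apply Cmod_ge_0 | unfold q; lra].
Qed.

Lemma pseries_ode (a b : nat -> R) (p q x : R) :
  Rbar_lt (Rabs x) (CV_radius a) -> Rbar_lt (Rabs x) (CV_radius b) ->
  (forall n, PS_derive a n = p * a n + q * b n + INR n * a n)%R ->
  ((1 - x) * PSeries (PS_derive a) x = p * PSeries a x + q * PSeries b x)%R.
Proof.
  intros Ha Hb Hc.
  assert (Hd : ex_pseries (PS_derive a) x) by (apply ex_pseries_derive; auto).
  replace ((1 - x) * PSeries (PS_derive a) x)%R
    with (PSeries (PS_derive a) x - x * PSeries (PS_derive a) x)%R by ring.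
  rewrite <- PSeries_incr_1, <- PSeries_minus; [| auto | apply ex_pseries_incr_1; auto].
  rewrite (PSeries_ext _ (PS_plus (PS_scal p a) (PS_scal q b))).
  - rewrite PSeries_plus, !PSeries_scal; [reflexivity | |];
      apply ex_pseries_scal; try apply Rmult_comm; apply CV_radius_inside; auto.
  - intros [| n]; unfold PS_minus, PS_plus, PS_scal, PS_incr_1.
    + change (PS_derive a 0 + - 0 = p * a 0%nat + q * b 0%nat)%R. rewrite Hc. simpl. ring.
    + change (PS_derive a (S n) + - PS_derive a n = p * a (S n) + q * b (S n))%R.
      rewrite Hc. unfold PS_derive. ring.
Qed.

(** The real part of [(1 - t)^(p + i q) (fr t + i fi t)]. *)
Definition rotated (p q : R) (fr fi : R -> R) (t : R) : R :=
  exp (p * ln (1 - t)) * (cos (q * ln (1 - t)) * fr t - sin (q * ln (1 - t)) * fi t).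

(** [(1 - t) F' = (p + i q) F] makes [(1 - t)^(p + i q) F] constant. *)
Lemma is_derive_rotated_0 (p q : R) (fr fi : R -> R) (x : R) :
  (x < 1)%R -> ex_derive fr x -> ex_derive fi x ->
  ((1 - x) * Derive fr x = p * fr x - q * fi x)%R ->
  ((1 - x) * Derive fi x = p * fi x + q * fr x)%R ->
  is_derive (rotated p q fr fi) x 0%R.
Proof.
  intros Hx Hr Hi Er Ei. unfold rotated. auto_derive.
  - repeat split; auto; lra.
  - assert (Dr : Derive fr x = ((p * fr x - q * fi x) / (1 - x))%R) by (rewrite <- Er; field; lra).
    assert (Di : Derive fi x = ((p * fi x + q * fr x) / (1 - x))%R) by (rewrite <- Ei; field; lra).
    change (Derive (fun t => fr t) x) with (Derive fr x).
    change (Derive (fun t => fi t) x) with (Derive fi x).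
    rewrite Dr, Di. field. lra.
Qed.

Lemma rotated_0 (p q : R) (fr fi : R -> R) : rotated p q fr fi 0 = fr 0%R.
Proof. unfold rotated. rewrite Rminus_0_r, ln_1, !Rmult_0_r, exp_0, cos_0, sin_0. ring. Qed.

Definition nbinom_re (al : C) (n : nat) : R := Re (nbinom al n).
Definition nbinom_im (al : C) (n : nat) : R := Im (nbinom al n).

Lemma PS_derive_nbinom_re (al : C) (n : nat) :
  PS_derive (nbinom_re al) n
  = (Re al * nbinom_re al n + - Im al * nbinom_im al n + INR n * nbinom_re al n)%R.
Proof.
  unfold PS_derive, nbinom_re, nbinom_im. rewrite <- re_scal_l, nbinom_S_rec.
  unfold Re, Im; simpl; ring.
Qed.

Lemma PS_derive_nbinom_im (al : C) (n : nat) :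
  PS_derive (nbinom_im al) n
  = (Re al * nbinom_im al n + Im al * nbinom_re al n + INR n * nbinom_im al n)%R.
Proof.
  unfold PS_derive, nbinom_re, nbinom_im. rewrite <- im_scal_l, nbinom_S_rec.
  unfold Re, Im; simpl; ring.
Qed.

Section BinomialSeries.

Variables (al : C) (x : R).
Hypothesis x_in_disk : (Rabs x < 1)%R.

Lemma CV_radius_nbinom_re (c : R) : (Rabs c <= Rabs x)%R ->
  Rbar_lt (Rabs c) (CV_radius (nbinom_re al)).
Proof.
  intros Hc. apply CV_radius_gt_of_nbinom_bound with al; [intros; apply re_le_Cmod | lra].
Qed.

Lemma CV_radius_nbinom_im (c : R) : (Rabs c <= Rabs x)%R ->
  Rbar_lt (Rabs c) (CV_radius (nbinom_im al)).
Proof.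
  intros Hc. apply CV_radius_gt_of_nbinom_bound with al; [intros; apply Rabs_Im_le_Cmod | lra].
Qed.

Lemma is_derive_binomial_rotated (c : R) : (Rabs (c - 0) <= Rabs x)%R ->
  is_derive (rotated (Re al) (Im al) (PSeries (nbinom_re al)) (PSeries (nbinom_im al))) c 0%R
  /\ is_derive (rotated (Re al) (Im al) (PSeries (nbinom_im al))
                  (fun t => - PSeries (nbinom_re al) t)%R) c 0%R.
Proof.
  rewrite Rminus_0_r. intros Hc.
  pose proof (CV_radius_nbinom_re c Hc) as Hre. pose proof (CV_radius_nbinom_im c Hc) as Him.
  assert (Hc1 : (c < 1)%R) by (pose proof (Rle_abs c); lra).
  pose proof (pseries_ode _ _ _ _ c Hre Him (PS_derive_nbinom_re al)) as Ore.
  pose proof (pseries_ode _ _ _ _ c Him Hre (PS_derive_nbinom_im al)) as Oim.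
  rewrite <- Derive_PSeries in Ore, Oim by assumption.
  split; apply is_derive_rotated_0; auto using ex_derive_PSeries;
    try rewrite Derive_opp; try lra.
  apply (ex_derive_opp (V := R_NormedModule)), ex_derive_PSeries, Hre.
Qed.

Lemma binomial_pseries_value :
  Cexp (al * RtoC (ln (1 - x))) * (PSeries (nbinom_re al) x, PSeries (nbinom_im al) x) = 1.
Proof.
  assert (Hx : (Rabs (x - 0) <= Rabs x)%R) by (rewrite Rminus_0_r; lra).
  destruct (MVT_cor4 _ (fun _ => 0%R) 0%R (Rabs x)
              (fun c Hc => proj1 (is_derive_binomial_rotated c Hc)) x Hx)
    as [c1 [Hr _]].
  destruct (MVT_cor4 _ (fun _ => 0%R) 0%R (Rabs x)
              (fun c Hc => proj2 (is_derive_binomial_rotated c Hc)) x Hx)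
    as [c2 [Hi _]].
  rewrite !rotated_0, !PSeries_0 in *.
  assert (E0 : nbinom_re al 0 = 1%R /\ nbinom_im al 0 = 0%R)
    by (unfold nbinom_re, nbinom_im; rewrite nbinom_0; split; reflexivity).
  destruct E0 as [-> ->] in Hr, Hi.
  assert (Ec : Cexp (al * RtoC (ln (1 - x)))
               = (exp (Re al * ln (1 - x)) * cos (Im al * ln (1 - x)),
                  exp (Re al * ln (1 - x)) * sin (Im al * ln (1 - x)))%R)
    by (unfold Cexp; rewrite re_scal_r, im_scal_r; reflexivity).
  rewrite Ec. unfold rotated in Hr, Hi.
  apply injective_projections; unfold Cmult; cbn [fst snd RtoC]; lra.
Qed.

Lemma binomial_series :
  Cis_lim_seq (fun N => Csum (fun n => nbinom al n * RtoC x ^ n) N)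
              (Cexp (- (al * RtoC (ln (1 - x))))).
Proof.
  assert (Hx : (Rabs x <= Rabs x)%R) by lra.
  replace (Cexp (- (al * RtoC (ln (1 - x)))))
    with ((PSeries (nbinom_re al) x, PSeries (nbinom_im al) x) : C).
  2:{ rewrite <- (Cmult_1_r (Cexp _)), <- binomial_pseries_value, Cmult_assoc, Cexp_opp_mul.
      symmetry. apply Cmult_1_l. }
  split; simpl.
  - apply (is_lim_seq_ext (fun N => sum_f_R0 (fun n => nbinom_re al n * x ^ n) N)%R).
    + intros N. rewrite Re_Csum. apply sum_eq. intros n _.
      rewrite <- RtoC_pow, re_scal_r. reflexivity.
    + apply is_lim_seq_sum_f_R0, is_pseries_R, PSeries_correct, CV_radius_inside.
      apply CV_radius_nbinom_re, Hx.
  - apply (is_lim_seq_ext (fun N => sum_f_R0 (fun n => nbinom_im al n * x ^ n) N)%R).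
    + intros N. rewrite Im_Csum. apply sum_eq. intros n _.
      rewrite <- RtoC_pow, im_scal_r. reflexivity.
    + apply is_lim_seq_sum_f_R0, is_pseries_R, PSeries_correct, CV_radius_inside.
      apply CV_radius_nbinom_im, Hx.
Qed.

End BinomialSeries.

Lemma binomial_series_half (al : C) :
  Cis_lim_seq (fun N => Csum (fun n => nbinom al n * (/ 2) ^ n) N) (Rcpow 2 al).
Proof.
  assert (Hx : (Rabs (/ 2) < 1)%R) by (rewrite Rabs_right; lra).
  replace (Rcpow 2 al) with (Cexp (- (al * RtoC (ln (1 - / 2))))).
  - rewrite <- RtoC_inv by lra. apply binomial_series, Hx.
  - unfold Rcpow. replace (1 - / 2)%R with (/ 2)%R by field.
    rewrite ln_Rinv, RtoC_opp by lra. f_equal. ring.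
Qed.

Lemma weighted_binomial_series_half (al : C) :
  Cis_lim_seq (fun M => Csum (fun N => RtoC (INR N) * nbinom al N * (/ 2) ^ N) M)
              (al * Rcpow 2 al).
Proof.
  apply Cis_lim_seq_incr_1.
  apply Cis_lim_seq_ext with (fun M => al / 2 * Csum (fun N => nbinom (al + 1) N * (/ 2) ^ N) M).
  - intros M. rewrite Csum_shift. change (INR 0) with 0%R. rewrite !Cmult_0_l, Cplus_0_l.
    rewrite <- Csum_scal. apply Csum_ext_le. intros N _.
    rewrite nbinom_S_mul. change ((/ 2) ^ S N) with (/ 2 * (/ 2) ^ N). field.
  - replace (al * Rcpow 2 al) with (al / 2 * Rcpow 2 (al + 1)).
    + apply Cis_lim_seq_scal, binomial_series_half.
    + rewrite Rcpow_add_1 by lra. field.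
Qed.


(** * The reduction formula *)
Lemma Cis_lim_seq_square_of_diagonal (t : nat -> nat -> C) (A : R) (l : C) :
  is_series (fun N => sum_f_R0 (fun m => Cmod (t m (N - m)%nat)) N) A ->
  Cis_lim_seq (fun M => Csum (fun N => Csum (fun m => t m (N - m)%nat) N) M) l ->
  Cis_lim_seq (fun M => Csum (fun m => Csum (fun n => t m n) M) M) l.
Proof.
  intros HA HD.
  set (tri := fun M => sum_f_R0 (fun m => sum_f_R0 (fun n => Cmod (t m n)) (M - m)%nat) M).
  assert (Htri : forall M,
            tri M = sum_f_R0 (fun N => sum_f_R0 (fun m => Cmod (t m (N - m)%nat)) N) M)
    by (intros; apply (sum_f_R0_triangle_diag (fun m n => Cmod (t m n)))).
  assert (Hdiag_nonneg : forall N, (0 <= sum_f_R0 (fun m => Cmod (t m (N - m)%nat)) N)%R)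
    by (intros; apply sum_f_R0_nonneg; intros; apply Cmod_ge_0).
  assert (Hgap : forall M,
    (Cmod (Csum (fun m => Csum (fun n => t m n) M) M
           - Csum (fun m => Csum (fun n => t m n) (M - m)%nat) M) <= A - tri M)%R).
  { intros M. rewrite <- Csum_minus. eapply Rle_trans; [apply Cmod_Csum_le |].
    eapply Rle_trans.
    { apply sum_Rle. intros m Hm. apply (Cmod_Csum_sub_le (fun n => t m n) (M - m)%nat M). lia. }
    rewrite minus_sum. fold (tri M).
    assert ((sum_f_R0 (fun m => sum_f_R0 (fun n => Cmod (t m n)) M) M <= tri (M + M)%nat)%R).
    { unfold tri. eapply Rle_trans.
      - apply sum_Rle with (Bn := fun m => sum_f_R0 (fun n => Cmod (t m n)) (M + M - m)%nat).
        intros m Hm. apply sum_f_R0_le_mono; [intros; apply Cmod_ge_0 | lia].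
      - apply sum_f_R0_le_mono; [| lia]. intros; apply sum_f_R0_nonneg; intros; apply Cmod_ge_0. }
    assert (tri (M + M)%nat <= A)%R by (rewrite Htri; apply sum_f_R0_le_series; auto).
    lra. }
  apply Cis_lim_seq_ext with (fun M => Csum (fun N => Csum (fun m => t m (N - m)%nat) N) M +
        (Csum (fun m => Csum (fun n => t m n) M) M
         - Csum (fun m => Csum (fun n => t m n) (M - m)%nat) M)).
  { intros M. rewrite Csum_triangle_diag. ring. }
  rewrite <- (Cplus_0_r l). apply Cis_lim_seq_plus; auto.
  apply Cis_lim_seq_Cmod.
  apply is_lim_seq_le_le with (u := fun _ => 0%R) (w := fun M => (A - tri M)%R).
  - intros M. split; [apply Cmod_ge_0 |].
    replace (_ - 0) with (Csum (fun m => Csum (fun n => t m n) M) M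
                          - Csum (fun m => Csum (fun n => t m n) (M - m)%nat) M) by ring.
    apply Hgap.
  - apply is_lim_seq_const.
  - rewrite <- (Rminus_diag A).
    apply (is_lim_seq_minus' (fun _ => A) tri A A); [apply is_lim_seq_const |].
    eapply is_lim_seq_ext; [intros; symmetry; apply Htri |]. apply is_lim_seq_sum_f_R0, HA.
Qed.

Lemma poch_succ_mul (z : C) (n : nat) : poch (z + 1) n * z = poch z n * (z + RtoC (INR n)).
Proof. rewrite Cmult_comm, <- poch_S_left. reflexivity. Qed.

(** The general term of [F[al : a ; b, al/2 + 1 ; be : - ; al/2 ; 1/2, 1/2]], using
    [(al/2 + 1)_n / (al/2)_n = 1 + 2 n / al]. *)
Definition kdf_half_term (al be a b : C) (m n : nat) : C :=
  poch al (m + n) / poch be (m + n) * (/ 2) ^ (m + n) * (nbinom a m * nbinom b n)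
  * (1 + 2 * RtoC (INR n) / al).

Lemma kdf_term_half (al be a b : C) (m n : nat) : ~ nonpos_int be -> ~ nonpos_int (al / 2) ->
  kdf_term [al] [a] [b; al / 2 + 1] [be] [] [al / 2] (/ 2) (/ 2) m n
  = kdf_half_term al be a b m n.
Proof.
  intros Hbe Hal.
  unfold kdf_term, kdf_half_term, poch_list, nbinom. simpl fold_right.
  assert (Hal0 : al <> 0).
  { intros H0. apply (not_nonpos_int_neq0 _ Hal). rewrite H0. field. }
  pose proof (poch_neq0 be (m + n) Hbe). pose proof (poch_neq0 (al / 2) n Hal).
  pose proof (INR_fact_neq0_C m). pose proof (INR_fact_neq0_C n).
  replace (poch (al / 2 + 1) n) with (poch (al / 2) n * (al / 2 + RtoC (INR n)) / (al / 2))
    by (rewrite <- poch_succ_mul; field; auto).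
  rewrite Cpow_add_r. field. repeat split; auto.
Qed.

Section KdFHalf.

Variables (al be a b : C).
Hypothesis al_half_ok : ~ nonpos_int (al / 2).
Hypothesis be_ok : ~ nonpos_int be.

Lemma al_neq0 : al <> 0.
Proof.
  intros H. apply (not_nonpos_int_neq0 _ al_half_ok). rewrite H. field.
Qed.

Lemma Csum_kdf_half_term_diag (N : nat) : a + b = be ->
  Csum (fun m => kdf_half_term al be a b m (N - m)%nat) N
  = nbinom al N * (/ 2) ^ N + 2 * b / (al * be) * (RtoC (INR N) * nbinom al N * (/ 2) ^ N).
Proof.
  intros Hab.
  pose proof al_neq0. pose proof (not_nonpos_int_neq0 be be_ok).
  pose proof (poch_neq0 be N be_ok). pose proof (INR_fact_neq0_C N).
  set (K := poch al N / poch be N * (/ 2) ^ N).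
  rewrite (Csum_ext_le _ (fun m => K * (nbinom a m * nbinom b (N - m))
             + K * (2 / al) * (RtoC (INR (N - m)) * (nbinom a m * nbinom b (N - m))))).
  2:{ intros m Hm. unfold kdf_half_term, K. replace (m + (N - m))%nat with N by lia. field. auto. }
  rewrite Csum_plus, !Csum_scal, Csum_nbinom_vandermonde, Hab.
  pose proof (Csum_nbinom_vandermonde_weighted a b N) as HW. rewrite Hab in HW.
  set (W := Csum _ N) in HW |- *.
  replace W with (b * (RtoC (INR N) * nbinom be N) / be) by (rewrite <- HW; field; auto).
  unfold K, nbinom. field. repeat split; auto.
Qed.

Lemma kdf_half_diag_lim : a + b = be ->
  Cis_lim_seq (fun M => Csum (fun N => Csum (fun m => kdf_half_term al be a b m (N - m)%nat) N) M)
    (Rcpow 2 al * (1 + 2 * b / be)).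
Proof.
  intros Hab. pose proof al_neq0. pose proof (not_nonpos_int_neq0 be be_ok).
  apply Cis_lim_seq_ext with (fun M => Csum (fun N => nbinom al N * (/ 2) ^ N) M
      + 2 * b / (al * be) * Csum (fun N => RtoC (INR N) * nbinom al N * (/ 2) ^ N) M).
  - intros M. rewrite <- Csum_scal, <- Csum_plus. apply Csum_ext_le. intros N _.
    symmetry. apply Csum_kdf_half_term_diag, Hab.
  - replace (Rcpow 2 al * (1 + 2 * b / be))
      with (Rcpow 2 al + 2 * b / (al * be) * (al * Rcpow 2 al)) by (field; auto).
    apply Cis_lim_seq_plus; [apply binomial_series_half |].
    apply Cis_lim_seq_scal, weighted_binomial_series_half.
Qed.

Definition kdf_half_bound (s : R) (N : nat) : R :=
  Cmod (poch al N / poch be N) * (/ 2) ^ N * (1 + 2 * INR N / Cmod al) * rnbinom s N.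

Lemma Cmod_kdf_half_term_le (m n : nat) :
  (Cmod (kdf_half_term al be a b m n)
   <= Cmod (poch al (m + n) / poch be (m + n)) * (/ 2) ^ (m + n)
      * (1 + 2 * INR (m + n) / Cmod al) * (rnbinom (Cmod a) m * rnbinom (Cmod b) n))%R.
Proof.
  assert (Hal : (0 < Cmod al)%R) by (apply Cmod_gt_0, al_neq0).
  unfold kdf_half_term. rewrite !Cmod_mult, <- RtoC_inv, <- RtoC_pow, Cmod_R, Rabs_right
    by (lra || apply Rle_ge, pow_le; lra).
  assert (H1 : (Cmod (1 + 2 * RtoC (INR n) / al) <= 1 + 2 * INR (m + n) / Cmod al)%R).
  { eapply Rle_trans; [apply Cmod_triangle |].
    rewrite Cmod_1, Cmod_div, Cmod_mult, !Cmod_R, !Rabs_right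
      by (apply al_neq0 || (apply Rle_ge, pos_INR) || lra).
    apply Rplus_le_compat_l, Rmult_le_compat_r; [left; apply Rinv_0_lt_compat; auto |].
    apply Rmult_le_compat_l; [lra | apply le_INR; lia]. }
  pose proof (Cmod_nbinom_le a m). pose proof (Cmod_nbinom_le b n).
  pose proof (Cmod_ge_0 (nbinom a m)). pose proof (Cmod_ge_0 (nbinom b n)).
  pose proof (Cmod_ge_0 (1 + 2 * RtoC (INR n) / al)).
  set (X := (Cmod (poch al (m + n) / poch be (m + n)) * (/ 2) ^ (m + n))%R).
  assert (HX : (0 <= X)%R) by (apply Rmult_le_pos; [apply Cmod_ge_0 | apply pow_le; lra]).
  replace (X * (1 + 2 * INR (m + n) / Cmod al) * (rnbinom (Cmod a) m * rnbinom (Cmod b) n))%R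
    with (X * (rnbinom (Cmod a) m * rnbinom (Cmod b) n) * (1 + 2 * INR (m + n) / Cmod al))%R
    by ring.
  apply Rmult_le_compat; auto.
  - apply Rmult_le_pos; [exact HX | apply Rmult_le_pos; auto].
  - apply Rmult_le_compat_l; [exact HX | apply Rmult_le_compat; auto].
Qed.

Lemma sum_Cmod_kdf_half_diag_le (N : nat) :
  (sum_f_R0 (fun m => Cmod (kdf_half_term al be a b m (N - m)%nat)) N
   <= kdf_half_bound (Cmod a + Cmod b) N)%R.
Proof.
  eapply Rle_trans.
  { apply sum_Rle with (Bn := fun m => (rnbinom (Cmod a) m * rnbinom (Cmod b) (N - m)
        * (Cmod (poch al N / poch be N) * (/ 2) ^ N * (1 + 2 * INR N / Cmod al)))%R).
    intros m Hm. eapply Rle_trans; [apply Cmod_kdf_half_term_le |].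
    replace (m + (N - m))%nat with N by lia. right; ring. }
  rewrite <- scal_sum, sum_rnbinom_vandermonde. right. unfold kdf_half_bound. ring.
Qed.

Lemma Cmod_poch_ratio_S_le (N : nat) : (8 * Cmod al + 9 * Cmod be + 1 <= INR N)%R ->
  (Cmod (poch al (S N) / poch be (S N)) <= 9 / 8 * Cmod (poch al N / poch be N))%R.
Proof.
  intros HN. pose proof (Cmod_ge_0 al). pose proof (Cmod_ge_0 be).
  pose proof (add_nat_neq0 be N be_ok). pose proof (poch_neq0 be N be_ok).
  change (poch al (S N)) with (poch al N * (al + RtoC (INR N))).
  change (poch be (S N)) with (poch be N * (be + RtoC (INR N))).
  replace (poch al N * (al + RtoC (INR N)) / (poch be N * (be + RtoC (INR N))))
    with (poch al N / poch be N * ((al + RtoC (INR N)) / (be + RtoC (INR N)))) by (field; auto).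
  rewrite Cmod_mult, (Cmod_div (al + _)) by auto.
  rewrite Rmult_comm. apply Rmult_le_compat_r; [apply Cmod_ge_0 |].
  pose proof (Cmod_add_INR_ge be N).
  assert (Cmod (al + RtoC (INR N)) <= Cmod al + INR N)%R.
  { eapply Rle_trans; [apply Cmod_triangle |].
    rewrite Cmod_R, Rabs_right by (apply Rle_ge, pos_INR). lra. }
  apply Rmult_le_reg_r with (Cmod (be + RtoC (INR N))); [lra |].
  unfold Rdiv. rewrite Rmult_assoc, Rinv_l by lra. lra.
Qed.

Lemma rnbinom_S_le (s : R) (N : nat) : (0 <= s)%R -> (8 * s <= INR N)%R ->
  (rnbinom s (S N) <= 9 / 8 * rnbinom s N)%R.
Proof.
  intros Hs HN. rewrite rnbinom_S, Rmult_comm.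
  apply Rmult_le_compat_r; [apply rnbinom_nonneg, Hs |].
  rewrite S_INR. apply Rmult_le_reg_r with (INR N + 1)%R; [lra |].
  unfold Rdiv. rewrite Rmult_assoc, Rinv_l by lra. lra.
Qed.

Lemma Rmult4_le_compat (x y z w x' y' z' w' : R) :
  (0 <= x -> 0 <= y -> 0 <= z -> 0 <= w -> x <= x' -> y <= y' -> z <= z' -> w <= w' ->
   x * y * z * w <= x' * y' * z' * w')%R.
Proof.
  intros. repeat apply Rmult_le_compat; try assumption; repeat apply Rmult_le_pos; assumption.
Qed.

Lemma kdf_weight_ge_1 (N : nat) : (1 <= 1 + 2 * INR N / Cmod al)%R.
Proof.
  assert (Hal : (0 < Cmod al)%R) by (apply Cmod_gt_0, al_neq0).
  pose proof (pos_INR N). pose proof (Rinv_0_lt_compat _ Hal). unfold Rdiv. nra.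
Qed.

Lemma ex_series_kdf_half_bound (s : R) : (0 <= s)%R -> ex_series (kdf_half_bound s).
Proof.
  intros Hs.
  assert (Hal : (0 < Cmod al)%R) by (apply Cmod_gt_0, al_neq0).
  pose proof (Cmod_ge_0 be).
  destruct (INR_unbounded (8 * Cmod al + 9 * Cmod be + 8 * s + 8)) as [N0 HN0].
  apply (ex_series_ratio _ (3 / 4) N0); [lra | |].
  - intros N. pose proof (kdf_weight_ge_1 N). unfold kdf_half_bound.
    apply Rmult_le_pos; [apply Rmult_le_pos; [apply Rmult_le_pos |] |];
      auto using Cmod_ge_0, rnbinom_nonneg; try lra. apply pow_le; lra.
  - intros N HN. assert (HNN : (INR N0 <= INR N)%R) by (apply le_INR; auto).
    unfold kdf_half_bound.
    pose proof (Cmod_poch_ratio_S_le N ltac:(lra)) as H1.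
    pose proof (rnbinom_S_le s N Hs ltac:(lra)) as H2.
    assert (H3 : (1 + 2 * INR (S N) / Cmod al <= 9 / 8 * (1 + 2 * INR N / Cmod al))%R).
    { rewrite S_INR. apply Rmult_le_reg_r with (Cmod al); [exact Hal |].
      field_simplify; lra. }
    pose proof (kdf_weight_ge_1 N). pose proof (kdf_weight_ge_1 (S N)).
    pose proof (rnbinom_nonneg s (S N) Hs). pose proof (rnbinom_nonneg s N Hs).
    pose proof (Cmod_ge_0 (poch al (S N) / poch be (S N))).
    pose proof (Cmod_ge_0 (poch al N / poch be N)).
    assert (0 <= (/ 2) ^ N)%R by (apply pow_le; lra).
    set (X := Cmod (poch al N / poch be N)) in *. set (Y := (1 + 2 * INR N / Cmod al)%R) in *.
    set (Z := rnbinom s N) in *. clearbody X Y Z.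
    simpl pow.
    apply Rle_trans with ((9 / 8 * X) * (/ 2 * (/ 2) ^ N) * (9 / 8 * Y) * (9 / 8 * Z))%R.
    + apply Rmult4_le_compat; lra.
    + assert (0 <= X * (/ 2) ^ N * Y * Z)%R by (repeat apply Rmult_le_pos; lra).
      replace (9 / 8 * X * (/ 2 * (/ 2) ^ N) * (9 / 8 * Y) * (9 / 8 * Z))%R
        with (729 / 1024 * (X * (/ 2) ^ N * Y * Z))%R by field.
      lra.
Qed.

Lemma ex_series_Cmod_kdf_half_diag :
  ex_series (fun N => sum_f_R0 (fun m => Cmod (kdf_half_term al be a b m (N - m)%nat)) N).
Proof.
  apply ex_series_Rle with (kdf_half_bound (Cmod a + Cmod b)).
  - intros N. rewrite Rabs_right by (apply Rle_ge, sum_f_R0_nonneg; intros; apply Cmod_ge_0).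
    apply sum_Cmod_kdf_half_diag_le.
  - apply ex_series_kdf_half_bound. pose proof (Cmod_ge_0 a); pose proof (Cmod_ge_0 b); lra.
Qed.

Lemma kdf_half_reduction : a + b = be ->
  Cis_lim_seq (kdf_partial [al] [a] [b; al / 2 + 1] [be] [] [al / 2] (/ 2) (/ 2))
    (Rcpow 2 al * (1 + 2 * b / be)).
Proof.
  intros Hab.
  apply Cis_lim_seq_ext
    with (fun M => Csum (fun m => Csum (fun n => kdf_half_term al be a b m n) M) M).
  { intros M. unfold kdf_partial. apply Csum_ext_le. intros m _. apply Csum_ext_le. intros n _.
    symmetry. apply kdf_term_half; auto. }
  destruct ex_series_Cmod_kdf_half_diag as [A HA].
  apply (Cis_lim_seq_square_of_diagonal _ A); auto.
  apply kdf_half_diag_lim, Hab.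
Qed.

End KdFHalf.

(** * Alternating binomial sums *)

Lemma binomR_succ_mul (i r : nat) : (r <= i)%nat ->
  (INR (S r) * binomR (S i) (S r) = INR (S i) * binomR i r)%R.
Proof.
  intros Hr. unfold binomR, Binomial.C.
  replace (S i - S r)%nat with (i - r)%nat by lia.
  change (fact (S i)) with (S i * fact i)%nat. change (fact (S r)) with (S r * fact r)%nat.
  rewrite !mult_INR.
  pose proof (INR_fact_neq_0 r). pose proof (INR_fact_neq_0 (i - r)).
  assert (INR (S r) <> 0)%R by (apply not_0_INR; lia).
  field. auto.
Qed.

Lemma sum_alt_binomR (i : nat) : (1 <= i)%nat ->
  sum_f_R0 (fun r => ((-1) ^ r * binomR i r)%R) i = 0%R.
Proof.
  intros Hi. pose proof (binomial (-1) 1 i) as H.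
  replace (-1 + 1)%R with 0%R in H by ring. rewrite pow_i in H by lia.
  rewrite H. apply sum_eq. intros r _. rewrite pow1. unfold binomR. ring.
Qed.

Lemma sum_binomR (i : nat) : sum_f_R0 (fun r => binomR i r) i = (2 ^ i)%R.
Proof.
  pose proof (binomial 1 1 i) as H. replace (1 + 1)%R with 2%R in H by ring.
  rewrite H. apply sum_eq. intros r _. rewrite !pow1. unfold binomR. ring.
Qed.

Lemma sum_binomR_affine (i : nat) (p q : C) :
  Csum (fun r => RtoC (binomR i r) * (p + q * RtoC (INR r))) i
  = p * RtoC (2 ^ i) + q * RtoC (INR i) * RtoC (2 ^ i) / 2.
Proof.
  rewrite (Csum_ext_le _ (fun r => p * RtoC (binomR i r) + q * RtoC (INR r * binomR i r)))
    by (intros; rewrite RtoC_mult; ring).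
  rewrite Csum_plus, !Csum_scal, !Csum_RtoC, sum_binomR.
  destruct i as [| i].
  - simpl. unfold binomR, Binomial.C. simpl. rewrite Rmult_0_l. field.
  - replace (sum_f_R0 (fun r => (INR r * binomR (S i) r)%R) (S i)) with (INR (S i) * 2 ^ i)%R.
    + rewrite RtoC_mult. simpl pow. rewrite RtoC_mult. field.
    + rewrite decomp_sum by lia. simpl pred. rewrite Rmult_0_l, Rplus_0_l.
      rewrite (sum_eq _ (fun r => (binomR i r * INR (S i))%R)).
      * rewrite <- scal_sum, sum_binomR. ring.
      * intros r Hr. rewrite binomR_succ_mul by exact Hr. ring.
Qed.

(** [sum_r (-1)^r C(i,r) f(r)] is [(-1)^i] times the [i]-th finite difference of [f]; here
    [f(r) = (x + r/2)_j] is a polynomial of degree [j] in [r] with leading coefficient [2^-j]. *)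
Definition alt_poch_sum (i j : nat) (x : C) : C :=
  Csum (fun r => RtoC ((-1) ^ r * binomR i r) * poch (x + RtoC (INR r) / 2) j) i.

Lemma alt_poch_sum_S (i j : nat) (x : C) : alt_poch_sum (S i) (S j) x
  = (x + RtoC (INR j)) * alt_poch_sum (S i) j x - RtoC (INR (S i)) / 2 * alt_poch_sum i j (x + / 2).
Proof.
  unfold alt_poch_sum.
  transitivity (Csum (fun r =>
      (x + RtoC (INR j)) * (RtoC ((-1) ^ r * binomR (S i) r) * poch (x + RtoC (INR r) / 2) j)
      + RtoC ((-1) ^ r * binomR (S i) r) * (RtoC (INR r) / 2) * poch (x + RtoC (INR r) / 2) j)
      (S i)).
  { apply Csum_ext_le. intros r _.
    change (poch (x + RtoC (INR r) / 2) (S j))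
      with (poch (x + RtoC (INR r) / 2) j * (x + RtoC (INR r) / 2 + RtoC (INR j))). ring. }
  rewrite Csum_plus, Csum_scal. unfold Cminus. f_equal.
  rewrite Csum_shift. change (INR 0) with 0%R.
  replace (RtoC 0 / 2) with (RtoC 0) by field. rewrite Cmult_0_r, Cmult_0_l, Cplus_0_l.
  rewrite <- Csum_scal, <- Csum_opp.
  apply Csum_ext_le. intros r Hr.
  replace (x + RtoC (INR (S r)) / 2) with (x + / 2 + RtoC (INR r) / 2)
    by (rewrite S_INR, RtoC_plus; field).
  assert (E : RtoC ((-1) ^ S r * binomR (S i) (S r)) * (RtoC (INR (S r)) / 2)
              = - (RtoC (INR (S i)) / 2) * RtoC ((-1) ^ r * binomR i r)).
  { transitivity (RtoC ((-1) ^ S r * binomR (S i) (S r) * (INR (S r) / 2))).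
    { rewrite !RtoC_mult, !RtoC_div by lra. reflexivity. }
    transitivity (RtoC (- (INR (S i) / 2) * ((-1) ^ r * binomR i r))).
    2:{ rewrite !RtoC_mult, !RtoC_opp, !RtoC_div by lra. reflexivity. }
    f_equal. simpl pow. unfold Rdiv.
    replace (-1 * (-1) ^ r * binomR (S i) (S r) * (INR (S r) * / 2))%R
      with (- / 2 * (-1) ^ r * (INR (S r) * binomR (S i) (S r)))%R by ring.
    rewrite binomR_succ_mul by exact Hr. ring. }
  rewrite E. ring.
Qed.

Lemma alt_poch_sum_lt (j i : nat) (x : C) : (j < i)%nat -> alt_poch_sum i j x = 0.
Proof.
  revert i x. induction j; intros i x Hji.
  - unfold alt_poch_sum. simpl poch.
    rewrite (Csum_ext_le _ (fun r => RtoC ((-1) ^ r * binomR i r))) by (intros; ring).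
    rewrite Csum_RtoC, sum_alt_binomR by lia. reflexivity.
  - destruct i as [| i]; [lia |].
    rewrite alt_poch_sum_S, (IHj (S i)), (IHj i) by lia. ring.
Qed.

Definition alt_lead_coef (i : nat) : C := RtoC ((-1) ^ i * INR (fact i) / 2 ^ i).

Lemma alt_lead_coef_S (i : nat) : alt_lead_coef (S i) = - (RtoC (INR (S i)) / 2) * alt_lead_coef i.
Proof.
  unfold alt_lead_coef.
  transitivity (RtoC (- (INR (S i) / 2) * ((-1) ^ i * INR (fact i) / 2 ^ i))).
  2:{ assert (2 ^ i <> 0)%R by (apply pow_nonzero; lra).
      rewrite !RtoC_mult, !RtoC_opp, !RtoC_div by lra. reflexivity. }
  f_equal.
  change (fact (S i)) with (S i * fact i)%nat. rewrite mult_INR. simpl pow.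
  field. apply pow_nonzero. lra.
Qed.

Lemma alt_poch_sum_diag (i : nat) (x : C) : alt_poch_sum i i x = alt_lead_coef i.
Proof.
  revert x. induction i; intros x.
  - unfold alt_poch_sum, alt_lead_coef, binomR, Binomial.C. simpl.
    rewrite Cmult_1_r. f_equal. field.
  - rewrite alt_poch_sum_S, alt_poch_sum_lt, IHi, alt_lead_coef_S by lia. ring.
Qed.

Lemma alt_poch_sum_succ_diag (i : nat) (x : C) : alt_poch_sum i (S i) x
  = alt_lead_coef i * ((RtoC (INR i) + 1) * x + 3 * RtoC (INR i) * (RtoC (INR i) + 1) / 4).
Proof.
  revert x. induction i; intros x.
  - unfold alt_poch_sum, alt_lead_coef, binomR, Binomial.C. simpl.
    replace (RtoC (1 * (1 / (1 * 1)))) with (RtoC 1) by (f_equal; field).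
    replace (RtoC (1 * 1 / 1)) with (RtoC 1) by (f_equal; field).
    field.
  - rewrite alt_poch_sum_S, IHi, alt_poch_sum_diag, alt_lead_coef_S, S_INR, RtoC_plus. field.
Qed.

(** * Evaluation of the right-hand sides *)

Lemma sign_sq (i : nat) : RtoC ((-1) ^ i) * RtoC ((-1) ^ i) = 1.
Proof.
  rewrite <- RtoC_mult, <- Rpow_mult_distr.
  replace (-1 * -1)%R with 1%R by ring. rewrite pow1. reflexivity.
Qed.

(** The Gamma ratios are Pochhammer symbols [(x + r/2)_(i+1)], and the alternating sum
    keeps only the two top coefficients of this polynomial in [r]. *)
Lemma rhs_alternating_eq (i : nat) (al be : C) :
  (forall r : nat, (r <= i)%nat ->
      ~ nonpos_int (be / 4 - RtoC (INR i) + (RtoC (INR r) - 1) / 2)) ->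
  be <> 0 ->
  RtoC ((-1) ^ i) * Rcpow 2 (al + 3 + RtoC (INR i)) / (be * RtoC (INR (fact (i + 1))))
    * Csum (fun r => RtoC ((-1) ^ r * binomR i r)
             * (CGamma (be / 4 + RtoC (INR (r + 1)) / 2)
                / CGamma (be / 4 - RtoC (INR i) + (RtoC (INR r) - 1) / 2))) i
  = Rcpow 2 al * (1 + 2 * (be / 2 - 2 - RtoC (INR i)) / be).
Proof.
  intros Hne Hbe.
  set (x := be / 4 - RtoC (INR i) - / 2).
  rewrite (Csum_ext_le _
             (fun r => RtoC ((-1) ^ r * binomR i r) * poch (x + RtoC (INR r) / 2) (S i))).
  2:{ intros r Hr. f_equal.
      replace (be / 4 + RtoC (INR (r + 1)) / 2)
        with ((be / 4 - RtoC (INR i) + (RtoC (INR r) - 1) / 2) + RtoC (INR (S i)))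
        by (rewrite plus_INR, (S_INR i), !RtoC_plus; simpl; field).
      rewrite CGamma_add_nat_div by (apply Hne, Hr). f_equal. unfold x. field. }
  change (Csum _ i) with (alt_poch_sum i (S i) x).
  rewrite alt_poch_sum_succ_diag. unfold alt_lead_coef.
  replace (al + 3 + RtoC (INR i)) with (al + RtoC (INR (3 + i)))
    by (rewrite plus_INR, RtoC_plus; replace (INR 3) with 3%R by (simpl; ring); ring).
  rewrite Rcpow_add_nat by lra. replace (i + 1)%nat with (S i) by lia.
  change (fact (S i)) with (S i * fact i)%nat.
  rewrite mult_INR, S_INR, pow_add, !RtoC_mult, RtoC_div, RtoC_mult, RtoC_plus
    by (apply pow_nonzero; lra).
  set (s := RtoC ((-1) ^ i)). set (f := RtoC (INR (fact i))). set (t := RtoC (2 ^ i)).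
  set (n := RtoC (INR i)).
  assert (f <> 0) by apply INR_fact_neq0_C.
  assert (t <> 0) by (apply RtoC_neq0, pow_nonzero; lra).
  assert (n + RtoC 1 <> 0)
    by (unfold n; rewrite <- RtoC_plus; apply RtoC_neq0; pose proof (pos_INR i); lra).
  pose proof (sign_sq i) as Hss. fold s in Hss.
  replace (RtoC (2 ^ 3)) with (RtoC 8) by (f_equal; simpl; ring).
  unfold x. fold n.
  transitivity ((s * s) * (Rcpow 2 al * RtoC 8 * t / (be * ((n + RtoC 1) * f)) *
       (f / t * ((n + 1) * (be / 4 - n - / 2) + 3 * n * (n + 1) / 4)))).
  { field. repeat split; auto. }
  rewrite Hss. field. repeat split; auto.
Qed.

Lemma rhs_binomial_eq (i : nat) (al be : C) :
  (forall r : nat, (r <= i)%nat -> ~ nonpos_int (be / 4 + (RtoC (INR r) - 1) / 2)) ->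
  be <> 0 ->
  Rcpow 2 (al + 3 - RtoC (INR i)) / be
    * Csum (fun r => RtoC (binomR i r)
             * (CGamma (be / 4 + RtoC (INR (r + 1)) / 2)
                / CGamma (be / 4 + (RtoC (INR r) - 1) / 2))) i
  = Rcpow 2 al * (1 + 2 * (be / 2 - 2 + RtoC (INR i)) / be).
Proof.
  intros Hne Hbe.
  rewrite (Csum_ext_le _ (fun r => RtoC (binomR i r) * ((be / 4 - / 2) + / 2 * RtoC (INR r)))).
  2:{ intros r Hr. f_equal.
      replace (be / 4 + RtoC (INR (r + 1)) / 2)
        with ((be / 4 + (RtoC (INR r) - 1) / 2) + RtoC (INR 1))
        by (rewrite plus_INR, !RtoC_plus; simpl; field).
      rewrite CGamma_add_nat_div by (apply Hne, Hr). simpl. field. }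
  rewrite sum_binomR_affine.
  assert (E : Rcpow 2 (al + 3 - RtoC (INR i)) * RtoC (2 ^ i) = Rcpow 2 al * 8).
  { rewrite <- Rcpow_add_nat by lra.
    replace (al + 3 - RtoC (INR i) + RtoC (INR i)) with (al + RtoC (INR 3))
      by (replace (INR 3) with 3%R by (simpl; ring); ring).
    rewrite Rcpow_add_nat by lra. f_equal. f_equal. simpl; ring. }
  assert (RtoC (2 ^ i) <> 0) by (apply RtoC_neq0, pow_nonzero; lra).
  replace (Rcpow 2 (al + 3 - RtoC (INR i))) with (Rcpow 2 al * 8 / RtoC (2 ^ i))
    by (rewrite <- E; field; auto).
  field. auto.
Qed.

Theorem theorem4 (i : nat) (alpha beta : C) :
  ~ nonpos_int beta ->
  ~ nonpos_int (alpha / 2) ->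
  ((forall r : nat, (r <= i)%nat ->
      ~ nonpos_int (beta / 4 + RtoC (INR (r + 1)) / 2) /\
      ~ nonpos_int (beta / 4 - RtoC (INR i) + (RtoC (INR r) - 1) / 2)) ->
   Cis_lim_seq
     (kdf_partial [alpha] [beta / 2 + 2 + RtoC (INR i)]
        [beta / 2 - 2 - RtoC (INR i); alpha / 2 + 1]
        [beta] [] [alpha / 2] (/ 2) (/ 2))
     (RtoC ((-1) ^ i) * Rcpow 2 (alpha + 3 + RtoC (INR i))
        / (beta * RtoC (INR (fact (i + 1))))
      * Csum (fun r => RtoC ((-1) ^ r * binomR i r)
             * (CGamma (beta / 4 + RtoC (INR (r + 1)) / 2)
                / CGamma (beta / 4 - RtoC (INR i) + (RtoC (INR r) - 1) / 2))) i))
  /\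
  ((forall r : nat, (r <= i)%nat ->
      ~ nonpos_int (beta / 4 + RtoC (INR (r + 1)) / 2) /\
      ~ nonpos_int (beta / 4 + (RtoC (INR r) - 1) / 2)) ->
   Cis_lim_seq
     (kdf_partial [alpha] [beta / 2 + 2 - RtoC (INR i)]
        [beta / 2 - 2 + RtoC (INR i); alpha / 2 + 1]
        [beta] [] [alpha / 2] (/ 2) (/ 2))
     (Rcpow 2 (alpha + 3 - RtoC (INR i)) / beta
      * Csum (fun r => RtoC (binomR i r)
             * (CGamma (beta / 4 + RtoC (INR (r + 1)) / 2)
                / CGamma (beta / 4 + (RtoC (INR r) - 1) / 2))) i)).
Proof.
  intros Hbe Hal. pose proof (not_nonpos_int_neq0 beta Hbe) as Hbe0.
  split; intros Hne.
  - rewrite rhs_alternating_eq by first [exact Hbe0 | intros r Hr; apply (Hne r Hr)].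
    apply kdf_half_reduction; auto. field.
  - rewrite rhs_binomial_eq by first [exact Hbe0 | intros r Hr; apply (Hne r Hr)].
    apply kdf_half_reduction; auto. field.
Qed.
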